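(* Let $n\geq 2$ and let $A\in SL(2,\mathbb{Z})$ be a hyperbolic matrix with an eigenvalue $\lambda>n$, inducing the Anosov automorphism $h$ of $\mathbb{T}^2=\mathbb{R}^2/\mathbb{Z}^2$. Then there is no homeomorphism $f$ of $\mathbb{T}^2$ such that $hfh^{-1}=f^n$ and the homomorphism $BS(1,n)=\langle a,b\mid aba^{-1}=b^n\rangle\to\mathrm{Homeo}(\mathbb{T}^2)$, $a\mapsto h$, $b\mapsto f$, is injective. *)

From Stdlib Require Import Reals Lra ZArith List.
Open Scope R_scope.

(** The torus T^2 = R^2/Z^2, represented by the normalised representatives
    in [0,1)^2. *)
Definition T2 : Type :=
  { p : R * R | (0 <= fst p < 1) /\ (0 <= snd p < 1) }.

Lemma frac_part_range (x : R) : 0 <= frac_part x < 1.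
Proof. destruct (base_fp x) as [H1 H2]; split; lra. Qed.

Definition proj (v : R * R) : T2 :=
  exist _ (frac_part (fst v), frac_part (snd v))
        (conj (frac_part_range (fst v)) (frac_part_range (snd v))).

(** Distance on the circle R/Z, and the (max-)flat metric on T^2;
    it induces the quotient topology of T^2. *)
Definition circ_dist (x y : R) : R :=
  Rmin (frac_part (x - y)) (1 - frac_part (x - y)).

Definition tdist (p q : T2) : R :=
  Rmax (circ_dist (fst (proj1_sig p)) (fst (proj1_sig q)))
       (circ_dist (snd (proj1_sig p)) (snd (proj1_sig q))).

Definition tcontinuous (f : T2 -> T2) : Prop :=
  forall p (eps : R), 0 < eps -> exists delta, 0 < delta /\
    forall q, tdist p q < delta -> tdist (f p) (f q) < eps.

Definition is_homeo (f g : T2 -> T2) : Prop :=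
  (forall p, g (f p) = p) /\ (forall p, f (g p) = p) /\
  tcontinuous f /\ tcontinuous g.

Definition mat_act (a b c d : Z) (v : R * R) : R * R :=
  (IZR a * fst v + IZR b * snd v, IZR c * fst v + IZR d * snd v).

Definition toral_map (a b c d : Z) (p : T2) : T2 :=
  proj (mat_act a b c d (proj1_sig p)).

Definition in_SL2Z (a b c d : Z) : Prop := (a * d - b * c = 1)%Z.

(** A is hyperbolic: |trace A| > 2 (for SL(2,Z): no eigenvalue of modulus 1). *)
Definition hyperbolic (a b c d : Z) : Prop := (Z.abs (a + d) > 2)%Z.

Definition is_eigenvalue (a b c d : Z) (lam : R) : Prop :=
  exists v : R * R, v <> (0, 0) /\ mat_act a b c d v = (lam * fst v, lam * snd v).

Inductive letter : Type := La | LaI | Lb | LbI.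
Definition word := list letter.

(** The presented group BS(1,n) = < a, b | a b a^-1 = b^n >:
    two words are equal in BS(1,n) iff related by [bs_eq], the congruence
    generated by free cancellation and the defining relation. *)
Definition bs_rule (n : nat) (l r : word) : Prop :=
  (l = La :: LaI :: nil /\ r = nil) \/
  (l = LaI :: La :: nil /\ r = nil) \/
  (l = Lb :: LbI :: nil /\ r = nil) \/
  (l = LbI :: Lb :: nil /\ r = nil) \/
  (l = La :: Lb :: LaI :: nil /\ r = repeat Lb n).

Inductive bs_eq (n : nat) : word -> word -> Prop :=
| bs_step : forall u v l r, bs_rule n l r -> bs_eq n (u ++ l ++ v) (u ++ r ++ v)
| bs_refl : forall w, bs_eq n w w
| bs_sym : forall w1 w2, bs_eq n w1 w2 -> bs_eq n w2 w1
| bs_trans : forall w1 w2 w3, bs_eq n w1 w2 -> bs_eq n w2 w3 -> bs_eq n w1 w3.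

(** Evaluation of a word under a -> h, b -> f (with given inverses):
    the word x1 x2 ... xk maps to phi(x1) o phi(x2) o ... o phi(xk). *)
Fixpoint eval_word {X : Type} (h hinv f finv : X -> X) (w : word) : X -> X :=
  match w with
  | nil => fun x => x
  | l :: w' => fun x =>
      let y := eval_word h hinv f finv w' x in
      match l with La => h y | LaI => hinv y | Lb => f y | LbI => finv y end
  end.

(** A homeomorphism [f] of the torus lifts to a continuous map [F] of the plane with
    [F (x + m) = F x + B m] for an integer matrix [B], and [h f h^-1 = f^n] forces
    [A B = B^n A].  Comparing traces, a hyperbolic [A] leaves [B] no choice but to have
    finite order, so some power of [F] commutes with integer translations; composing a
    further power with an integer translation gives a lift [G] of a power of [f] with bounded
    displacement and exactly [A G A^-1 = G^n].  Conjugating [G^(n^k)] by [A^k] shows that [G]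
    moves points along the unstable direction by at most [n^k C / lam^k -> 0], and along the
    stable direction some iterate of [G] is uniformly close to the identity.  On each
    unstable line [G] is then a continuous injective map of [R] with iterates close to the
    identity, hence an involution; so [f] has finite order.  But [b] has infinite order in
    [BS(1,n)], as the affine representation [a |-> (x |-> n x)], [b |-> (x |-> x + 1)]
    shows, contradicting faithfulness. *)

From Stdlib Require Import Reals Lra Lia ZArith List Classical ClassicalEpsilon FunctionalExtensionality ProofIrrelevance Znumtheory.
From Coquelicot Require Import Compactness.
Open Scope R_scope.

Lemma iter_mul {X} (g : X -> X) k m x : Nat.iter (k * m) g x = Nat.iter k (Nat.iter m g) x.
Proof.
  induction k. reflexivity. simpl Nat.mul. rewrite Nat.iter_add, IHk. reflexivity.
Qed.

Lemma iter_comm {X} (g : X -> X) k m x : Nat.iter k (Nat.iter m g) x = Nat.iter m (Nat.iter k g) x.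
Proof. rewrite <- !iter_mul, Nat.mul_comm. reflexivity. Qed.

Lemma iter_injective {X} (g : X -> X) k : (forall x y, g x = g y -> x = y) ->
  forall x y, Nat.iter k g x = Nat.iter k g y -> x = y.
Proof. intros H. induction k; intros x y E; simpl in E; eauto. Qed.

Lemma iter_conj {X} (h hi g g' : X -> X) :
  (forall p, hi (h p) = p) -> (forall p, h (hi p) = p) -> (forall p, h (g (hi p)) = g' p) ->
  forall k p, h (Nat.iter k g (hi p)) = Nat.iter k g' p.
Proof.
  intros Hinv Hinv' Hc k. induction k; intros p; simpl; auto.
  rewrite <- IHk, <- Hc, Hinv. reflexivity.
Qed.

Lemma iter_conj_pow {X} (P Pi G : X -> X) n : (forall y, Pi (P y) = y) ->
  (forall x, P (G (Pi x)) = Nat.iter n G x) ->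
  forall k y, Nat.iter (n ^ k) G (Nat.iter k P y) = Nat.iter k P (G y).
Proof.
  intros HPi Hrel.
  assert (R1 : forall y, Nat.iter n G (P y) = P (G y)) by (intros y; rewrite <- Hrel, HPi; reflexivity).
  assert (R2 : forall m z, Nat.iter m (Nat.iter n G) (P z) = P (Nat.iter m G z)).
  { induction m; intros z; [reflexivity|]. rewrite !Nat.iter_succ, IHm, R1. reflexivity. }
  induction k; intros y; [reflexivity|].
  change (n ^ S k)%nat with (n * n ^ k)%nat.
  rewrite Nat.iter_succ, iter_mul, iter_comm, R2, IHk. reflexivity.
Qed.

Definition is_int (r : R) : Prop := exists z : Z, r = IZR z.

Lemma is_int_IZR z : is_int (IZR z). Proof. exists z; reflexivity. Qed.

Lemma is_int_0 : is_int 0. Proof. exists 0%Z; reflexivity. Qed.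

Lemma is_int_add r s : is_int r -> is_int s -> is_int (r + s).
Proof. intros [a ->] [b ->]; exists (a+b)%Z; rewrite plus_IZR; reflexivity. Qed.

Lemma is_int_opp r : is_int r -> is_int (- r).
Proof. intros [a ->]; exists (-a)%Z; rewrite opp_IZR; reflexivity. Qed.

Lemma is_int_sub r s : is_int r -> is_int s -> is_int (r - s).
Proof. intros; unfold Rminus; apply is_int_add; auto using is_int_opp. Qed.

Lemma is_int_mul r s : is_int r -> is_int s -> is_int (r * s).
Proof. intros [a ->] [b ->]; exists (a*b)%Z; rewrite mult_IZR; reflexivity. Qed.

Lemma is_int_small z : is_int z -> Rabs z < 1 -> z = 0.
Proof.
  intros [k ->] H. apply Rabs_def2 in H. destruct H as [H1 H2].
  assert (k < 1)%Z by (apply lt_IZR; lra).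
  assert (-1 < k)%Z by (apply lt_IZR; change (IZR (-1)) with (-(1)); lra).
  assert (k = 0)%Z by lia. subst; reflexivity.
Qed.

Lemma frac_part_is_int r : is_int (r - frac_part r).
Proof. unfold frac_part. exists (Int_part r). ring. Qed.

Lemma frac_part_char r t : is_int (r - t) -> 0 <= t < 1 -> frac_part r = t.
Proof.
  intros H Ht. pose proof (frac_part_range r).
  assert (is_int (frac_part r - t)).
  { replace (frac_part r - t) with ((r - t) - (r - frac_part r)) by ring.
    apply is_int_sub; auto using frac_part_is_int. }
  apply is_int_small in H1. lra. apply Rabs_def1; lra.
Qed.

Definition sfrac (r : R) : R :=
  if Rle_dec (frac_part r) (1/2) then frac_part r else frac_part r - 1.

Lemma sfrac_is_int r : is_int (r - sfrac r).
Proof.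
  unfold sfrac. destruct Rle_dec.
  - apply frac_part_is_int.
  - replace (r - (frac_part r - 1)) with ((r - frac_part r) + 1) by ring.
    apply is_int_add; [apply frac_part_is_int | exists 1%Z; reflexivity].
Qed.

Lemma sfrac_bound r : -1/2 < sfrac r <= 1/2.
Proof.
  pose proof (frac_part_range r). unfold sfrac. destruct Rle_dec; lra.
Qed.

Lemma sfrac_char r t : is_int (r - t) -> -1/2 < t <= 1/2 -> sfrac r = t.
Proof.
  intros H Ht. pose proof (sfrac_bound r).
  assert (is_int (sfrac r - t)).
  { replace (sfrac r - t) with ((r - t) - (r - sfrac r)) by ring.
    apply is_int_sub; auto using sfrac_is_int. }
  apply is_int_small in H1. lra. apply Rabs_def1; lra.
Qed.

Lemma sfrac_abs_min u t : is_int (u - t) -> Rabs (sfrac u) <= Rabs t.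
Proof.
  intros H. destruct (Rle_lt_dec (Rabs (sfrac u)) (Rabs t)) as [|Hl]; auto.
  pose proof (sfrac_bound u).
  assert (Habs : Rabs (sfrac u) <= 1/2) by (apply Rabs_le; lra).
  assert (Rabs t < 1/2) by lra.
  apply Rabs_def2 in H1.
  rewrite (sfrac_char u t H) in Hl by lra. lra.
Qed.

Lemma sfrac_add r s : Rabs (sfrac r) < 1/4 -> Rabs (sfrac s) < 1/4 -> sfrac (r + s) = sfrac r + sfrac s.
Proof.
  intros H1 H2. apply sfrac_char.
  - replace (r + s - (sfrac r + sfrac s)) with ((r - sfrac r) + (s - sfrac s)) by ring.
    apply is_int_add; apply sfrac_is_int.
  - apply Rabs_def2 in H1; apply Rabs_def2 in H2. lra.
Qed.

Lemma sfrac_0 : sfrac 0 = 0.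
Proof. apply sfrac_char. replace (0-0) with 0 by ring; apply is_int_0. lra. Qed.

Lemma sfrac_opp r : Rabs (sfrac (- r)) = Rabs (sfrac r).
Proof.
  apply Rle_antisym.
  - rewrite <- (Rabs_Ropp (sfrac r)). apply sfrac_abs_min.
    replace (- r - - sfrac r) with (-(r - sfrac r)) by ring. apply is_int_opp, sfrac_is_int.
  - rewrite <- (Rabs_Ropp (sfrac (-r))). apply sfrac_abs_min.
    replace (r - - sfrac (-r)) with (-(- r - sfrac (-r))) by ring. apply is_int_opp, sfrac_is_int.
Qed.

Lemma sfrac_abs_triang r s : Rabs (sfrac (r + s)) <= Rabs (sfrac r) + Rabs (sfrac s).
Proof.
  eapply Rle_trans. apply (sfrac_abs_min _ (sfrac r + sfrac s)).
  replace (r + s - (sfrac r + sfrac s)) with ((r - sfrac r) + (s - sfrac s)) by ring.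
  apply is_int_add; apply sfrac_is_int. apply Rabs_triang.
Qed.

Lemma circ_dist_sfrac x y : circ_dist x y = Rabs (sfrac (x - y)).
Proof.
  unfold circ_dist, sfrac. pose proof (frac_part_range (x - y)).
  destruct Rle_dec; unfold Rmin; destruct Rle_dec.
  - rewrite Rabs_right; lra.
  - lra.
  - rewrite Rabs_left; lra.
  - rewrite Rabs_left; lra.
Qed.

Definition vadd (x y : R * R) : R * R := (fst x + fst y, snd x + snd y).

Definition vsub (x y : R * R) : R * R := (fst x - fst y, snd x - snd y).

Definition vscale (t : R) (x : R * R) : R * R := (t * fst x, t * snd x).

Definition vnorm (x : R * R) : R := Rmax (Rabs (fst x)) (Rabs (snd x)).

Definition is_int2 (v : R * R) : Prop := is_int (fst v) /\ is_int (snd v).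

Lemma vec_eq (x y : R * R) : fst x = fst y -> snd x = snd y -> x = y.
Proof. destruct x, y; simpl; intros -> ->; reflexivity. Qed.

Lemma vnorm_ge0 x : 0 <= vnorm x.
Proof. unfold vnorm. eapply Rle_trans. apply Rabs_pos. apply Rmax_l. Qed.

Lemma vnorm_fst x : Rabs (fst x) <= vnorm x. Proof. apply Rmax_l. Qed.

Lemma vnorm_snd x : Rabs (snd x) <= vnorm x. Proof. apply Rmax_r. Qed.

Lemma vnorm_lt x e : Rabs (fst x) < e -> Rabs (snd x) < e -> vnorm x < e.
Proof. intros; unfold vnorm; apply Rmax_lub_lt; auto. Qed.

Lemma vnorm_le x e : Rabs (fst x) <= e -> Rabs (snd x) <= e -> vnorm x <= e.
Proof. intros; unfold vnorm; apply Rmax_lub; auto. Qed.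

Lemma vnorm_triang x y : vnorm (vadd x y) <= vnorm x + vnorm y.
Proof.
  apply vnorm_le; simpl; (eapply Rle_trans; [apply Rabs_triang|]);
  apply Rplus_le_compat; auto using vnorm_fst, vnorm_snd.
Qed.

Lemma vnorm_scale t x : vnorm (vscale t x) = Rabs t * vnorm x.
Proof.
  unfold vnorm, vscale; simpl. rewrite !Rabs_mult.
  unfold Rmax. destruct (Rle_dec (Rabs (fst x)) (Rabs (snd x)));
  destruct (Rle_dec (Rabs t * Rabs (fst x)) (Rabs t * Rabs (snd x))); try reflexivity.
  - exfalso. apply n. apply Rmult_le_compat_l; auto using Rabs_pos.
  - pose proof (Rabs_pos t). destruct H. exfalso; apply n. apply Rmult_le_reg_l in r; lra.
    rewrite <- H; ring.
Qed.

Lemma vnorm_sub_sym x y : vnorm (vsub x y) = vnorm (vsub y x).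
Proof.
  unfold vnorm, vsub; simpl. rewrite (Rabs_minus_sym (fst x)), (Rabs_minus_sym (snd x)). reflexivity.
Qed.

Lemma vsub_vscale_l s t x : vsub (vscale s x) (vscale t x) = vscale (s - t) x.
Proof. apply vec_eq; simpl; ring. Qed.

Lemma vsub_vscale_r t x y : vsub (vscale t y) (vscale t x) = vscale t (vsub y x).
Proof. apply vec_eq; simpl; ring. Qed.

Lemma vsub_vadd a b : vsub (vadd a b) a = b.
Proof. apply vec_eq; simpl; ring. Qed.

Lemma is_int2_scale_nat k v : is_int2 v -> is_int2 (vscale (INR k) v).
Proof.
  intros [H1 H2]. rewrite INR_IZR_INZ. split; simpl; apply is_int_mul; auto using is_int_IZR.
Qed.

Lemma is_int2_scale_Z z v : is_int2 v -> is_int2 (vscale (IZR z) v).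
Proof. intros [H1 H2]. split; simpl; apply is_int_mul; auto using is_int_IZR. Qed.

Definition rep (p : T2) : R * R := proj1_sig p.

Lemma T2_eq (p q : T2) : rep p = rep q -> p = q.
Proof.
  destruct p as [x Hx], q as [y Hy]; unfold rep; simpl; intros ->.
  f_equal. apply proof_irrelevance.
Qed.

Lemma rep_range p : (0 <= fst (rep p) < 1) /\ (0 <= snd (rep p) < 1).
Proof. destruct p; simpl; auto. Qed.

Lemma rep_proj x : rep (proj x) = (frac_part (fst x), frac_part (snd x)).
Proof. reflexivity. Qed.

Lemma proj_rep p : proj (rep p) = p.
Proof.
  apply T2_eq. rewrite rep_proj. destruct (rep_range p) as [H1 H2].
  apply vec_eq; simpl; apply frac_part_char; auto;
  replace (_ - _) with 0 by ring; apply is_int_0.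
Qed.

Lemma proj_eq x y : is_int2 (vsub x y) -> proj x = proj y.
Proof.
  intros [H1 H2]. apply T2_eq. rewrite !rep_proj. simpl in *.
  apply vec_eq; simpl; apply frac_part_char; try apply frac_part_range.
  - replace (fst x - frac_part (fst y)) with ((fst x - fst y) + (fst y - frac_part (fst y))) by ring.
    apply is_int_add; auto using frac_part_is_int.
  - replace (snd x - frac_part (snd y)) with ((snd x - snd y) + (snd y - frac_part (snd y))) by ring.
    apply is_int_add; auto using frac_part_is_int.
Qed.

Lemma proj_eq_inv x y : proj x = proj y -> is_int2 (vsub x y).
Proof.
  intros H. assert (H' : rep (proj x) = rep (proj y)) by (rewrite H; reflexivity).
  rewrite !rep_proj in H'. inversion H' as [[E1 E2]].
  split; simpl.
  - replace (fst x - fst y) with ((fst x - frac_part (fst x)) - (fst y - frac_part (fst y))) by (rewrite E1; ring).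
    apply is_int_sub; apply frac_part_is_int.
  - replace (snd x - snd y) with ((snd x - frac_part (snd x)) - (snd y - frac_part (snd y))) by (rewrite E2; ring).
    apply is_int_sub; apply frac_part_is_int.
Qed.

Lemma is_int2_rep_proj x : is_int2 (vsub x (rep (proj x))).
Proof. rewrite rep_proj; split; simpl; apply frac_part_is_int. Qed.

Lemma vnorm_rep p : vnorm (rep p) <= 1.
Proof.
  destruct (rep_range p). apply vnorm_le; rewrite Rabs_right; lra.
Qed.

Definition tdiff (p q : T2) : R * R :=
  (sfrac (fst (rep p) - fst (rep q)), sfrac (snd (rep p) - snd (rep q))).

Lemma tdist_tdiff p q : tdist p q = vnorm (tdiff p q).
Proof. unfold tdist, vnorm, tdiff; simpl. rewrite !circ_dist_sfrac. reflexivity. Qed.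

Lemma proj_add_tdiff x p q : proj x = q -> proj (vadd x (tdiff p q)) = p.
Proof.
  intros Hx. transitivity (proj (rep p)); [|apply proj_rep]. apply proj_eq.
  pose proof (proj_eq_inv _ _ (eq_trans Hx (eq_sym (proj_rep q)))) as [H1 H2].
  unfold tdiff, vadd, vsub in *; simpl in *. split; simpl.
  - replace (fst x + sfrac (fst (rep p) - fst (rep q)) - fst (rep p)) with
      ((fst x - fst (rep q)) - ((fst (rep p) - fst (rep q)) - sfrac (fst (rep p) - fst (rep q)))) by ring.
    apply is_int_sub; auto using sfrac_is_int.
  - replace (snd x + sfrac (snd (rep p) - snd (rep q)) - snd (rep p)) with
      ((snd x - snd (rep q)) - ((snd (rep p) - snd (rep q)) - sfrac (snd (rep p) - snd (rep q)))) by ring.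
    apply is_int_sub; auto using sfrac_is_int.
Qed.

Lemma tdiff_add p q r : tdist p q < 1/4 -> tdist q r < 1/4 -> tdiff p r = vadd (tdiff p q) (tdiff q r).
Proof.
  rewrite !tdist_tdiff. intros H1 H2.
  pose proof (vnorm_fst (tdiff p q)); pose proof (vnorm_snd (tdiff p q));
  pose proof (vnorm_fst (tdiff q r)); pose proof (vnorm_snd (tdiff q r)).
  unfold tdiff, vadd in *; simpl in *. apply vec_eq; simpl.
  - rewrite <- sfrac_add by lra. f_equal; ring.
  - rewrite <- sfrac_add by lra. f_equal; ring.
Qed.

Lemma tdiff_self p : tdiff p p = (0,0).
Proof. unfold tdiff. rewrite !Rminus_diag, sfrac_0. reflexivity. Qed.

Lemma vnorm_tdiff_le p q : vnorm (tdiff p q) <= 1/2.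
Proof.
  unfold tdiff, vnorm; simpl. pose proof (sfrac_bound (fst (rep p) - fst (rep q))).
  pose proof (sfrac_bound (snd (rep p) - snd (rep q))).
  apply Rmax_lub; apply Rabs_le; lra.
Qed.

Lemma tdist_sym p q : tdist p q = tdist q p.
Proof.
  rewrite !tdist_tdiff. unfold vnorm, tdiff; simpl.
  rewrite <- (sfrac_opp (fst (rep q) - _)), <- (sfrac_opp (snd (rep q) - _)).
  do 2 f_equal; f_equal; f_equal; ring.
Qed.

Lemma tdist_triang p q r : tdist p r <= tdist p q + tdist q r.
Proof.
  rewrite !tdist_tdiff. unfold vnorm, tdiff; simpl.
  apply Rmax_lub.
  - eapply Rle_trans. 2: apply Rplus_le_compat; apply Rmax_l.
    replace (fst (rep p) - fst (rep r)) with ((fst (rep p) - fst (rep q)) + (fst (rep q) - fst (rep r))) by ring.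
    apply sfrac_abs_triang.
  - eapply Rle_trans. 2: apply Rplus_le_compat; apply Rmax_r.
    replace (snd (rep p) - snd (rep r)) with ((snd (rep p) - snd (rep q)) + (snd (rep q) - snd (rep r))) by ring.
    apply sfrac_abs_triang.
Qed.

Lemma tdist_proj x y : tdist (proj x) (proj y) <= vnorm (vsub x y).
Proof.
  rewrite tdist_tdiff. unfold tdiff. rewrite !rep_proj. simpl. apply vnorm_le; simpl.
  - eapply Rle_trans. apply (sfrac_abs_min _ (fst x - fst y)).
    replace (frac_part (fst x) - frac_part (fst y) - (fst x - fst y)) with
      (-( (fst x - frac_part (fst x)) - (fst y - frac_part (fst y)))) by ring.
    apply is_int_opp, is_int_sub; apply frac_part_is_int. apply (vnorm_fst (vsub x y)).
  - eapply Rle_trans. apply (sfrac_abs_min _ (snd x - snd y)).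
    replace (frac_part (snd x) - frac_part (snd y) - (snd x - snd y)) with
      (-( (snd x - frac_part (snd x)) - (snd y - frac_part (snd y)))) by ring.
    apply is_int_opp, is_int_sub; apply frac_part_is_int. apply (vnorm_snd (vsub x y)).
Qed.

(* A Lebesgue-number argument on the compact square [[0,1]^2] of representatives. *)
Lemma tcontinuous_uniform (f : T2 -> T2) : tcontinuous f -> forall eps, 0 < eps ->
  exists delta, 0 < delta /\ forall p q, tdist p q < delta -> tdist (f p) (f q) < eps.
Proof.
  intros Hf eps Heps.
  pose (cpt := fun t : Tn 2 R => proj (fst t, fst (snd t))).
  assert (Hd : forall t : Tn 2 R, { d : R | 0 < d /\ forall q, tdist (cpt t) q < d ->
              tdist (f (cpt t)) (f q) < eps / 2 }).
  { intros t. apply constructive_indefinite_description. apply Hf. lra. }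
  pose (delta := fun t => mkposreal (proj1_sig (Hd t) / 2)
          (Rdiv_lt_0_compat _ _ (proj1 (proj2_sig (Hd t))) Rlt_0_2)).
  destruct (compactness_value 2 (0,(0,tt)) (1,(1,tt)) delta) as [d Hcd].
  exists (pos d). split. apply cond_pos.
  intros p q Hpq.
  destruct (rep_range p) as [Hp1 Hp2].
  specialize (Hcd (fst (rep p), (snd (rep p), tt))).
  apply NNPP. intro Hn. apply Hcd. { simpl. repeat split; lra. }
  intros [t [Hbt [Hct Hdt]]]. apply Hn.
  destruct t as [t1 [t2 []]]. simpl in Hct. destruct Hct as [Hc1 [Hc2 _]].
  unfold delta in *; simpl in *.
  destruct (Hd (t1, (t2, tt))) as [dt [Hdt0 Hdt1]]; simpl in *.
  assert (E1 : tdist (cpt (t1,(t2,tt))) p < dt / 2).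
  { unfold cpt; simpl. replace (tdist (proj (t1, t2)) p) with (tdist (proj (t1, t2)) (proj (rep p))) by (rewrite proj_rep; reflexivity).
    eapply Rle_lt_trans. apply tdist_proj. apply vnorm_lt; simpl.
    rewrite Rabs_minus_sym; auto. rewrite Rabs_minus_sym; auto. }
  assert (E2 : tdist (cpt (t1,(t2,tt))) q < dt).
  { eapply Rle_lt_trans. apply (tdist_triang _ p). lra. }
  pose proof (Hdt1 p ltac:(lra)). pose proof (Hdt1 q E2).
  eapply Rle_lt_trans. apply (tdist_triang _ (f (cpt (t1,(t2,tt))))).
  rewrite tdist_sym. lra.
Qed.

(** * Lifting continuous maps of the torus to the plane *)

Fixpoint chain_lift (g : nat -> T2) (k : nat) : R * R :=
  match k with
  | O => rep (g O)
  | S k' => vadd (chain_lift g k') (tdiff (g (S k')) (g k'))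
  end.

Lemma chain_lift_proj g k : proj (chain_lift g k) = g k.
Proof.
  induction k; simpl. apply proj_rep. apply proj_add_tdiff; auto.
Qed.

Lemma chain_lift_S g k : chain_lift g (S k) = vadd (chain_lift g k) (tdiff (g (S k)) (g k)).
Proof. reflexivity. Qed.

Lemma chain_lift_refine g k :
  (forall i, (i < k)%nat -> tdist (g (S (2*i))) (g (2*i)%nat) < 1/4 /\
                         tdist (g (S (S (2*i)))) (g (S (2*i))) < 1/4) ->
  chain_lift g (2*k) = chain_lift (fun i => g (2*i)%nat) k.
Proof.
  induction k; intros H. reflexivity.
  replace (2 * S k)%nat with (S (S (2*k))) by lia. rewrite !chain_lift_S.
  rewrite IHk by (intros; apply H; lia).
  destruct (H k ltac:(lia)) as [H1 H2].
  replace (S (2*k)) with (2*k+1)%nat in * by lia.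
  replace (S (2*k+1)) with (2*(S k))%nat in * by lia.
  rewrite (tdiff_add (g (2 * S k)%nat) (g (2*k+1)%nat) (g (2*k)%nat)) by auto.
  apply vec_eq; simpl; ring.
Qed.

(* The lift of [f] at [x] follows [f] along the segment from [0] to [x] in [N] steps, lifting
   each step of the image by the shortest displacement; it does not change once the steps
   are shorter than the modulus of uniform continuity, so [2^k] steps for large [k] give a
   well-defined lift. *)
Definition path_point (f : T2 -> T2) (N : nat) (x : R * R) (i : nat) : T2 :=
  f (proj (vscale (INR i / INR N) x)).

Definition path_lift f N x := chain_lift (path_point f N x) N.

(* Steps of size below [1/8] keep sums of two steps below [1/4], where [tdiff] is additive. *)
Definition ucont_eighth (f : T2 -> T2) (d0 : R) :=
  0 < d0 /\ forall p q, tdist p q < d0 -> tdist (f p) (f q) < 1/8.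

Lemma path_point_step f d0 N x i : ucont_eighth f d0 -> (0 < N)%nat -> vnorm x / INR N < d0 ->
  tdist (path_point f N x (S i)) (path_point f N x i) < 1/8.
Proof.
  intros [Hd0 Hu] HN Hx. apply Hu. eapply Rle_lt_trans. apply tdist_proj.
  rewrite vsub_vscale_l, vnorm_scale.
  assert (0 < INR N) by (apply lt_0_INR; lia).
  replace (INR (S i) / INR N - INR i / INR N) with (/ INR N) by (rewrite S_INR; field; lra).
  rewrite Rabs_right by (apply Rle_ge, Rlt_le, Rinv_0_lt_compat; lra).
  unfold Rdiv in Hx. lra.
Qed.

Lemma path_lift_double f d0 N x : ucont_eighth f d0 -> (0 < N)%nat -> vnorm x / INR N < d0 ->
  path_lift f (2*N) x = path_lift f N x.
Proof.
  intros Hu HN Hx. unfold path_lift.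
  assert (HN2 : (0 < 2*N)%nat) by lia.
  assert (Hx2 : vnorm x / INR (2*N) < d0).
  { rewrite mult_INR. pose proof (vnorm_ge0 x). assert (0 < INR N) by (apply lt_0_INR; lia).
    simpl. unfold Rdiv in *. rewrite Rinv_mult.
    replace (vnorm x * (/ (1+1) * / INR N)) with (/2 * (vnorm x * / INR N)) by (field; lra).
    assert (0 <= vnorm x * / INR N) by (apply Rmult_le_pos; auto; left; apply Rinv_0_lt_compat; lra). lra. }
  rewrite chain_lift_refine.
  - apply f_equal2; [|reflexivity]. apply functional_extensionality. intros i.
    unfold path_point. do 3 f_equal. rewrite !mult_INR. simpl. field. apply not_0_INR; lia.
  - intros i _. split; (eapply Rlt_trans; [apply (path_point_step f d0); auto|lra]).
Qed.

Lemma path_lift_ladder f d0 N x y : ucont_eighth f d0 -> (0 < N)%nat -> vnorm x / INR N < d0 ->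
  vnorm y / INR N < d0 -> vnorm (vsub y x) < d0 ->
  path_lift f N y = vadd (path_lift f N x) (tdiff (f (proj y)) (f (proj x))).
Proof.
  intros Hu HN Hx Hy Hxy. unfold path_lift.
  assert (HNp : 0 < INR N) by (apply lt_0_INR; lia).
  assert (Hab : forall k, (k <= N)%nat -> tdist (path_point f N y k) (path_point f N x k) < 1/8).
  { intros k Hk. apply (proj2 Hu). eapply Rle_lt_trans. apply tdist_proj.
    rewrite vsub_vscale_r, vnorm_scale.
    assert (0 <= INR k / INR N <= 1).
    { split. apply Rle_mult_inv_pos; auto; apply pos_INR.
      apply Rmult_le_reg_r with (INR N); auto. unfold Rdiv. rewrite Rmult_assoc, Rinv_l by lra.
      rewrite Rmult_1_r, Rmult_1_l. apply le_INR; auto. }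
    rewrite Rabs_right by lra. pose proof (vnorm_ge0 (vsub y x)).
    apply Rle_lt_trans with (1 * vnorm (vsub y x)). apply Rmult_le_compat_r; lra. lra. }
  assert (Hind : forall k, (k <= N)%nat ->
     chain_lift (path_point f N y) k = vadd (chain_lift (path_point f N x) k) (tdiff (path_point f N y k) (path_point f N x k))).
  { induction k; intros Hk.
    - simpl. unfold path_point. simpl. unfold Rdiv. rewrite Rmult_0_l.
      replace (vscale 0 y) with (vscale 0 x) by (apply vec_eq; simpl; ring).
      rewrite tdiff_self. destruct (rep _); apply vec_eq; simpl; ring.
    - rewrite !chain_lift_S, IHk by lia.
      pose proof (Hab k ltac:(lia)). pose proof (Hab (S k) Hk).
      pose proof (path_point_step f d0 N x k Hu HN Hx). pose proof (path_point_step f d0 N y k Hu HN Hy).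
      pose proof (tdiff_add (path_point f N y (S k)) (path_point f N x (S k)) (path_point f N x k) ltac:(lra) ltac:(lra)) as E1.
      pose proof (tdiff_add (path_point f N y (S k)) (path_point f N y k) (path_point f N x k) ltac:(lra) ltac:(lra)) as E2.
      rewrite E1 in E2.
      apply vec_eq; [apply (f_equal fst) in E2 | apply (f_equal snd) in E2]; simpl in *; lra. }
  rewrite Hind by lia. unfold path_point. rewrite Rdiv_diag by lra.
  replace (vscale 1 y) with y by (apply vec_eq; simpl; ring).
  replace (vscale 1 x) with x by (apply vec_eq; simpl; ring). reflexivity.
Qed.

Definition rcontinuous (G : R * R -> R * R) : Prop :=
  forall x eps, 0 < eps -> exists delta, 0 < delta /\
    forall y, vnorm (vsub y x) < delta -> vnorm (vsub (G y) (G x)) < eps.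

Definition is_lift (g : T2 -> T2) (G : R * R -> R * R) : Prop :=
  rcontinuous G /\ forall x, proj (G x) = g (proj x).

Definition refine_level (d0 : R) (x : R * R) : nat := Z.to_nat (up (vnorm x / d0)).

Definition canon_lift f d0 x := path_lift f (2 ^ refine_level d0 x) x.

Lemma refine_level_spec d0 x k : 0 < d0 -> (refine_level d0 x <= k)%nat -> vnorm x / INR (2 ^ k) < d0.
Proof.
  intros Hd Hk. unfold refine_level in Hk.
  pose proof (vnorm_ge0 x). pose proof (archimed (vnorm x / d0)) as [H1 _].
  assert (0 <= vnorm x / d0) by (apply Rle_mult_inv_pos; lra).
  assert (Hup : (0 < up (vnorm x / d0))%Z) by (apply lt_IZR; simpl; lra).
  assert (E : INR (Z.to_nat (up (vnorm x / d0))) = IZR (up (vnorm x / d0))).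
  { rewrite INR_IZR_INZ, Z2Nat.id by lia. reflexivity. }
  assert (Hlt : (k < 2 ^ k)%nat) by (apply Nat.pow_gt_lin_r; lia).
  apply le_INR in Hk. apply lt_INR in Hlt. rewrite E in Hk.
  assert (vnorm x / d0 < INR (2^k)) by lra.
  apply Rmult_lt_reg_r with (INR (2^k) / d0). apply Rdiv_lt_0_compat; lra.
  replace (vnorm x / INR (2 ^ k) * (INR (2 ^ k) / d0)) with (vnorm x / d0) by (field; lra).
  replace (d0 * (INR (2 ^ k) / d0)) with (INR (2^k)) by (field; lra). lra.
Qed.

Lemma path_lift_stable f d0 x k : ucont_eighth f d0 -> (refine_level d0 x <= k)%nat -> path_lift f (2 ^ k) x = canon_lift f d0 x.
Proof.
  intros Hu Hk. induction Hk. reflexivity.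
  rewrite <- IHHk. rewrite Nat.pow_succ_r'. apply (path_lift_double f d0). auto.
  pose proof (Nat.pow_nonzero 2 m). lia. apply refine_level_spec; auto. apply Hu.
Qed.

Lemma canon_lift_local f d0 x y : ucont_eighth f d0 -> vnorm (vsub y x) < d0 ->
  canon_lift f d0 y = vadd (canon_lift f d0 x) (tdiff (f (proj y)) (f (proj x))).
Proof.
  intros Hu Hxy. set (k := Nat.max (refine_level d0 x) (refine_level d0 y)).
  rewrite <- (path_lift_stable f d0 x k), <- (path_lift_stable f d0 y k) by (auto; lia).
  apply (path_lift_ladder f d0); auto. pose proof (Nat.pow_nonzero 2 k). lia.
  apply refine_level_spec; [apply Hu|lia]. apply refine_level_spec; [apply Hu|lia].
Qed.

Lemma canon_lift_proj f d0 x : proj (canon_lift f d0 x) = f (proj x).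
Proof.
  unfold canon_lift, path_lift. rewrite chain_lift_proj. unfold path_point.
  rewrite Rdiv_diag. replace (vscale 1 x) with x by (apply vec_eq; simpl; ring). reflexivity.
  apply not_0_INR. apply Nat.pow_nonzero. lia.
Qed.

Lemma lift_exists (f : T2 -> T2) : tcontinuous f ->
  exists F, is_lift f F /\ exists d, 0 < d /\ forall x y, vnorm (vsub y x) < d -> vnorm (vsub (F y) (F x)) <= 1/2.
Proof.
  intros Hf. destruct (tcontinuous_uniform f Hf (1/8) ltac:(lra)) as [d0 [Hd0 Hu]].
  assert (Hu8 : ucont_eighth f d0) by (split; auto).
  exists (canon_lift f d0). split; [split|].
  - intros x eps Heps. destruct (Hf (proj x) eps Heps) as [d1 [Hd1 Hc]].
    exists (Rmin d0 d1). split. apply Rmin_pos; auto.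
    intros y Hy. rewrite (canon_lift_local f d0 x y Hu8) by (eapply Rlt_le_trans; [apply Hy|apply Rmin_l]).
    rewrite vsub_vadd, <- tdist_tdiff, tdist_sym. apply Hc.
    eapply Rle_lt_trans. apply tdist_proj. rewrite vnorm_sub_sym.
    eapply Rlt_le_trans; [apply Hy|apply Rmin_r].
  - apply canon_lift_proj.
  - exists d0. split; auto. intros x y Hxy. rewrite (canon_lift_local f d0 x y Hu8 Hxy), vsub_vadd.
    apply vnorm_tdiff_le.
Qed.

Lemma rcontinuous_line (G : R * R -> R * R) (l : R * R -> R) K p v : rcontinuous G ->
  (forall x y, Rabs (l x - l y) <= K * vnorm (vsub x y)) ->
  continuity (fun t => l (G (vadd p (vscale t v)))).
Proof.
  intros HG Hl t. unfold continuity_pt, continue_in, limit1_in, limit_in, D_x, no_cond.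
  simpl. unfold R_dist. intros eps Heps.
  pose proof (Rabs_pos K) as HK. pose proof (vnorm_ge0 v) as Hv.
  destruct (HG (vadd p (vscale t v)) (eps / (Rabs K + 1))) as [d [Hd HGd]].
  { apply Rdiv_lt_0_compat; lra. }
  exists (d / (vnorm v + 1)). split; [apply Rdiv_lt_0_compat; lra|]. intros y [_ Hy].
  assert (Hline : vnorm (vsub (vadd p (vscale y v)) (vadd p (vscale t v))) < d).
  { replace (vsub (vadd p (vscale y v)) (vadd p (vscale t v))) with (vscale (y - t) v)
      by (apply vec_eq; simpl; ring).
    rewrite vnorm_scale. apply Rmult_lt_reg_r with (/ (vnorm v + 1)); [apply Rinv_0_lt_compat; lra|].
    apply Rle_lt_trans with (Rabs (y - t)); [|exact Hy].
    apply Rmult_le_reg_r with (vnorm v + 1); [lra|].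
    field_simplify; [|lra]. pose proof (Rabs_pos (y - t)). nra. }
  specialize (HGd _ Hline).
  eapply Rle_lt_trans. apply Hl.
  apply Rle_lt_trans with ((Rabs K + 1) * vnorm (vsub (G (vadd p (vscale y v))) (G (vadd p (vscale t v))))).
  { pose proof (vnorm_ge0 (vsub (G (vadd p (vscale y v))) (G (vadd p (vscale t v))))).
    pose proof (Rle_abs K). nra. }
  apply Rmult_lt_reg_r with (/ (Rabs K + 1)); [apply Rinv_0_lt_compat; lra|].
  replace ((Rabs K + 1) * _ * / (Rabs K + 1)) with
    (vnorm (vsub (G (vadd p (vscale y v))) (G (vadd p (vscale t v))))) by (field; lra).
  exact HGd.
Qed.

Lemma integer_valued_continuous_const (phi : R -> R) : continuity phi -> (forall t, is_int (phi t)) -> phi 1 = phi 0.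
Proof.
  intros Hc Hz.
  destruct (Req_dec (phi 1) (phi 0)) as [|Hne]; auto. exfalso.
  assert (Hd : is_int (phi 1 - phi 0)) by (apply is_int_sub; auto).
  assert (H1 : 1 <= Rabs (phi 1 - phi 0)).
  { destruct (Rlt_le_dec (Rabs (phi 1 - phi 0)) 1); auto. apply is_int_small in Hd; auto. lra. }
  destruct (Rle_lt_dec 0 (phi 1 - phi 0)).
  - rewrite Rabs_right in H1 by lra.
    destruct (IVT (fun t => phi t - (phi 0 + 1/2)) 0 1) as [z [_ Hz0]].
    + apply continuity_minus; auto. apply continuity_const. intros ? ?; reflexivity.
    + lra. + lra. + lra.
    + assert (is_int (phi z - phi 0)) by (apply is_int_sub; auto).
      apply is_int_small in H. lra. rewrite Rabs_right; lra.
  - rewrite Rabs_left in H1 by lra.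
    destruct (IVT (fun t => (phi 0 - 1/2) - phi t) 0 1) as [z [_ Hz0]].
    + apply continuity_minus; auto. apply continuity_const. intros ? ?; reflexivity.
    + lra. + lra. + lra.
    + assert (is_int (phi z - phi 0)) by (apply is_int_sub; auto).
      apply is_int_small in H. lra. rewrite Rabs_left; lra.
Qed.

Lemma integer_valued_rcontinuous_const (G : R * R -> R * R) : rcontinuous G -> (forall x, is_int2 (G x)) ->
  forall x, G x = G (0,0).
Proof.
  intros HG Hz x.
  assert (Hline : forall t, vadd (0,0) (vscale t x) = vscale t x) by (intros; apply vec_eq; simpl; ring).
  assert (Hfst := rcontinuous_line G fst 1 (0,0) x HG ltac:(intros y z; rewrite Rmult_1_l; apply (vnorm_fst (vsub y z)))).
  assert (Hsnd := rcontinuous_line G snd 1 (0,0) x HG ltac:(intros y z; rewrite Rmult_1_l; apply (vnorm_snd (vsub y z)))).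
  pose proof (integer_valued_continuous_const _ Hfst (fun t => proj1 (Hz _))) as E1.
  pose proof (integer_valued_continuous_const _ Hsnd (fun t => proj2 (Hz _))) as E2.
  cbv beta in E1, E2. rewrite !Hline in E1, E2.
  replace (vscale 1 x) with x in * by (apply vec_eq; simpl; ring).
  replace (vscale 0 x) with (0,0) in * by (apply vec_eq; simpl; ring).
  apply vec_eq; auto.
Qed.

Lemma rcontinuous_sub G1 G2 : rcontinuous G1 -> rcontinuous G2 -> rcontinuous (fun x => vsub (G1 x) (G2 x)).
Proof.
  intros H1 H2 x eps Heps.
  destruct (H1 x (eps/2) ltac:(lra)) as [d1 [Hd1 K1]].
  destruct (H2 x (eps/2) ltac:(lra)) as [d2 [Hd2 K2]].
  exists (Rmin d1 d2). split. apply Rmin_pos; auto. intros y Hy.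
  pose proof (K1 y (Rlt_le_trans _ _ _ Hy (Rmin_l _ _))).
  pose proof (K2 y (Rlt_le_trans _ _ _ Hy (Rmin_r _ _))).
  replace (vsub (vsub (G1 y) (G2 y)) (vsub (G1 x) (G2 x))) with
    (vadd (vsub (G1 y) (G1 x)) (vscale (-1) (vsub (G2 y) (G2 x)))) by (apply vec_eq; simpl; ring).
  eapply Rle_lt_trans. apply vnorm_triang. rewrite vnorm_scale. replace (Rabs (-1)) with 1 by (unfold Rabs; destruct Rcase_abs; lra). lra.
Qed.

Lemma lift_unique g G1 G2 : is_lift g G1 -> is_lift g G2 ->
  exists v, is_int2 v /\ forall x, G1 x = vadd (G2 x) v.
Proof.
  intros [C1 P1] [C2 P2].
  assert (Hz : forall x, is_int2 (vsub (G1 x) (G2 x))).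
  { intros x. apply proj_eq_inv. rewrite P1, P2. reflexivity. }
  pose proof (integer_valued_rcontinuous_const _ (rcontinuous_sub _ _ C1 C2) Hz) as E.
  exists (vsub (G1 (0,0)) (G2 (0,0))). split. apply Hz.
  intros x. rewrite <- (E x). apply vec_eq; simpl; ring.
Qed.

Lemma rcontinuous_comp G1 G2 : rcontinuous G1 -> rcontinuous G2 -> rcontinuous (fun x => G1 (G2 x)).
Proof.
  intros H1 H2 x eps Heps.
  destruct (H1 (G2 x) eps Heps) as [d1 [Hd1 K1]].
  destruct (H2 x d1 Hd1) as [d2 [Hd2 K2]].
  exists d2. split; auto.
Qed.

Lemma rcontinuous_id : rcontinuous (fun x => x).
Proof. intros x eps Heps. exists eps. split; auto. Qed.

Lemma rcontinuous_transl G w : rcontinuous G -> rcontinuous (fun x => vadd (G x) w).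
Proof.
  intros H x eps Heps. destruct (H x eps Heps) as [d [Hd K]]. exists d. split; auto.
  intros y Hy. replace (vsub (vadd (G y) w) (vadd (G x) w)) with (vsub (G y) (G x)) by (apply vec_eq; simpl; ring).
  auto.
Qed.

Lemma lift_comp g1 g2 G1 G2 : is_lift g1 G1 -> is_lift g2 G2 -> is_lift (fun p => g1 (g2 p)) (fun x => G1 (G2 x)).
Proof.
  intros [C1 P1] [C2 P2]. split. apply rcontinuous_comp; auto. intros x. rewrite P1, P2. reflexivity.
Qed.

Lemma lift_id : is_lift (fun p => p) (fun x => x).
Proof. split. apply rcontinuous_id. reflexivity. Qed.

Lemma lift_iter g G k : is_lift g G -> is_lift (Nat.iter k g) (Nat.iter k G).
Proof.
  intros HL. induction k; simpl. apply lift_id. apply (lift_comp g _ G _ HL IHk).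
Qed.

Lemma lift_transl g G w : is_lift g G -> is_int2 w -> is_lift g (fun x => vadd (G x) w).
Proof.
  intros [C P] Hw. split. apply rcontinuous_transl; auto.
  intros x. rewrite <- P. apply proj_eq. destruct Hw; split; simpl;
  [replace (fst (G x) + fst w - fst (G x)) with (fst w) by ring|
   replace (snd (G x) + snd w - snd (G x)) with (snd w) by ring]; auto.
Qed.

Lemma lift_involutive g G : is_lift g G -> (forall x, G (G x) = x) -> forall p, g (g p) = p.
Proof.
  intros [_ HG] HGG p. rewrite <- (proj_rep p), <- !HG, HGG. reflexivity.
Qed.

(** * Integer matrices and linear parts of lifts *)

Lemma mat_act_sub a b c d x y : vsub (mat_act a b c d y) (mat_act a b c d x) = mat_act a b c d (vsub y x).
Proof. apply vec_eq; unfold mat_act; simpl; ring. Qed.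

Lemma vnorm_mat_act a b c d v :
  vnorm (mat_act a b c d v) <= (Rabs (IZR a) + Rabs (IZR b) + Rabs (IZR c) + Rabs (IZR d)) * vnorm v.
Proof.
  pose proof (vnorm_fst v). pose proof (vnorm_snd v). pose proof (vnorm_ge0 v).
  pose proof (Rabs_pos (IZR a)). pose proof (Rabs_pos (IZR b)).
  pose proof (Rabs_pos (IZR c)). pose proof (Rabs_pos (IZR d)).
  apply vnorm_le; unfold mat_act; simpl.
  - eapply Rle_trans. apply Rabs_triang. rewrite !Rabs_mult.
    assert (Rabs (IZR a) * Rabs (fst v) <= Rabs (IZR a) * vnorm v) by (apply Rmult_le_compat_l; auto).
    assert (Rabs (IZR b) * Rabs (snd v) <= Rabs (IZR b) * vnorm v) by (apply Rmult_le_compat_l; auto).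
    nra.
  - eapply Rle_trans. apply Rabs_triang. rewrite !Rabs_mult.
    assert (Rabs (IZR c) * Rabs (fst v) <= Rabs (IZR c) * vnorm v) by (apply Rmult_le_compat_l; auto).
    assert (Rabs (IZR d) * Rabs (snd v) <= Rabs (IZR d) * vnorm v) by (apply Rmult_le_compat_l; auto).
    nra.
Qed.

Lemma rcontinuous_mat_act a b c d : rcontinuous (mat_act a b c d).
Proof.
  intros x eps Heps.
  set (K := Rabs (IZR a) + Rabs (IZR b) + Rabs (IZR c) + Rabs (IZR d)).
  assert (0 <= K) by (unfold K; pose proof (Rabs_pos (IZR a)); pose proof (Rabs_pos (IZR b));
    pose proof (Rabs_pos (IZR c)); pose proof (Rabs_pos (IZR d)); lra).
  exists (eps / (K + 1)). split. apply Rdiv_lt_0_compat; lra.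
  intros y Hy. rewrite mat_act_sub. eapply Rle_lt_trans. apply vnorm_mat_act. fold K.
  pose proof (vnorm_ge0 (vsub y x)).
  apply Rle_lt_trans with ((K + 1) * vnorm (vsub y x)). apply Rmult_le_compat_r; lra.
  apply Rmult_lt_reg_r with (/ (K+1)). apply Rinv_0_lt_compat; lra.
  rewrite Rmult_comm, <- Rmult_assoc, Rinv_l, Rmult_1_l by lra. apply Hy.
Qed.

Lemma mat_act_is_int2 a b c d v : is_int2 v -> is_int2 (mat_act a b c d v).
Proof.
  intros [H1 H2]. unfold mat_act; split; simpl;
  apply is_int_add; apply is_int_mul; auto using is_int_IZR.
Qed.

Lemma lift_toral a b c d : is_lift (toral_map a b c d) (mat_act a b c d).
Proof.
  split. apply rcontinuous_mat_act. intros x. unfold toral_map. apply proj_eq.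
  rewrite mat_act_sub. apply mat_act_is_int2.
  destruct (is_int2_rep_proj x) as [H1 H2]. split; auto.
Qed.

Record mat2 := Mat2 { m11 : Z; m12 : Z; m21 : Z; m22 : Z }.

Definition mact (M : mat2) := mat_act (m11 M) (m12 M) (m21 M) (m22 M).

Definition mmul (M N : mat2) : mat2 :=
  Mat2 (m11 M * m11 N + m12 M * m21 N)%Z (m11 M * m12 N + m12 M * m22 N)%Z
      (m21 M * m11 N + m22 M * m21 N)%Z (m21 M * m12 N + m22 M * m22 N)%Z.

Definition mat_one : mat2 := Mat2 1 0 0 1.

Fixpoint mpow (M : mat2) (k : nat) : mat2 :=
  match k with O => mat_one | S k' => mmul M (mpow M k') end.

Lemma mact_mul M N v : mact (mmul M N) v = mact M (mact N v).
Proof.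
  destruct M, N; unfold mact, mmul, mat_act; simpl. apply vec_eq; simpl;
  rewrite !plus_IZR, !mult_IZR; ring.
Qed.

Lemma mact_id v : mact mat_one v = v.
Proof. unfold mact, mat_act; simpl; apply vec_eq; simpl; ring. Qed.

Lemma mact_add M x y : mact M (vadd x y) = vadd (mact M x) (mact M y).
Proof. unfold mact, mat_act, vadd; apply vec_eq; simpl; ring. Qed.

Lemma mact_is_int2 M v : is_int2 v -> is_int2 (mact M v).
Proof. apply mat_act_is_int2. Qed.

Lemma mmul_assoc M N P : mmul M (mmul N P) = mmul (mmul M N) P.
Proof. destruct M, N, P; unfold mmul; cbn -[Z.mul Z.add]; f_equal; ring. Qed.

Lemma mmul_id_r M : mmul M mat_one = M.
Proof. destruct M; unfold mmul, mat_one; cbn -[Z.mul Z.add]; f_equal; ring. Qed.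

Lemma mpow_one k : mpow mat_one k = mat_one.
Proof. induction k; simpl; auto. rewrite IHk. reflexivity. Qed.

Definition mdet (M : mat2) : Z := (m11 M * m22 M - m12 M * m21 M)%Z.

Definition mtr (M : mat2) : Z := (m11 M + m22 M)%Z.

Lemma mdet_mul M N : mdet (mmul M N) = (mdet M * mdet N)%Z.
Proof. destruct M, N; unfold mdet, mmul; simpl; ring. Qed.

Lemma det_IZR a b c d : (a * d - b * c = 1)%Z -> IZR a * IZR d - IZR b * IZR c = 1.
Proof. intros Hdet. rewrite <- !mult_IZR, <- minus_IZR, Hdet. reflexivity. Qed.

Lemma mact_adj_r a b c d y : (a * d - b * c = 1)%Z ->
  mact (Mat2 a b c d) (mact (Mat2 d (-b) (-c) a) y) = y.
Proof.
  intros Hdet. unfold mact, mat_act; simpl. apply vec_eq; simpl;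
  rewrite ?opp_IZR; [transitivity (IZR (a*d - b*c) * fst y) | transitivity (IZR (a*d - b*c) * snd y)];
  try (rewrite minus_IZR, !mult_IZR; ring); rewrite Hdet; ring.
Qed.

Lemma mact_adj_l a b c d y : (a * d - b * c = 1)%Z ->
  mact (Mat2 d (-b) (-c) a) (mact (Mat2 a b c d) y) = y.
Proof.
  intros Hdet. unfold mact, mat_act; simpl. apply vec_eq; simpl;
  rewrite ?opp_IZR; [transitivity (IZR (a*d - b*c) * fst y) | transitivity (IZR (a*d - b*c) * snd y)];
  try (rewrite minus_IZR, !mult_IZR; ring); rewrite Hdet; ring.
Qed.

Definition mnorm (M : mat2) : R :=
  Rabs (IZR (m11 M)) + Rabs (IZR (m12 M)) + Rabs (IZR (m21 M)) + Rabs (IZR (m22 M)).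

Lemma mnorm_ge0 M : 0 <= mnorm M.
Proof.
  unfold mnorm. pose proof (Rabs_pos (IZR (m11 M))). pose proof (Rabs_pos (IZR (m12 M))).
  pose proof (Rabs_pos (IZR (m21 M))). pose proof (Rabs_pos (IZR (m22 M))). lra.
Qed.

Lemma vnorm_mact M v : vnorm (mact M v) <= mnorm M * vnorm v.
Proof. apply vnorm_mat_act. Qed.

Definition linear_part (G : R * R -> R * R) (M : mat2) : Prop :=
  forall x m, is_int2 m -> G (vadd x m) = vadd (G x) (mact M m).

Lemma shift_nat G w b : (forall x, G (vadd x w) = vadd (G x) b) ->
  forall k x, G (vadd x (vscale (INR k) w)) = vadd (G x) (vscale (INR k) b).
Proof.
  intros H. induction k; intros x.
  - simpl. replace (vadd x (vscale 0 w)) with x by (apply vec_eq; simpl; ring).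
    apply vec_eq; simpl; ring.
  - replace (vadd x (vscale (INR (S k)) w)) with (vadd (vadd x (vscale (INR k) w)) w)
      by (rewrite S_INR; apply vec_eq; simpl; ring).
    rewrite H, IHk. rewrite S_INR; apply vec_eq; simpl; ring.
Qed.

Lemma shift_Z G w b : (forall x, G (vadd x w) = vadd (G x) b) ->
  forall z x, G (vadd x (vscale (IZR z) w)) = vadd (G x) (vscale (IZR z) b).
Proof.
  intros H z x. destruct (Z_le_gt_dec 0 z).
  - replace (IZR z) with (INR (Z.to_nat z)) by (rewrite INR_IZR_INZ, Z2Nat.id; auto).
    apply shift_nat; auto.
  - replace (IZR z) with (- INR (Z.to_nat (- z))) by (rewrite INR_IZR_INZ, Z2Nat.id by lia; rewrite opp_IZR; ring).
    set (k := Z.to_nat (-z)).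
    pose proof (shift_nat G w b H k (vadd x (vscale (- INR k) w))) as E.
    replace (vadd (vadd x (vscale (- INR k) w)) (vscale (INR k) w)) with x in E by (apply vec_eq; simpl; ring).
    rewrite E. apply vec_eq; simpl; ring.
Qed.

Lemma lift_linear_part g G : is_lift g G -> exists M, linear_part G M.
Proof.
  intros HL.
  assert (Hsh : forall m, is_int2 m -> exists v, is_int2 v /\ forall x, G (vadd x m) = vadd (G x) v).
  { intros m Hm. apply (lift_unique g). 2: auto. destruct HL as [C P]. split.
    - apply (rcontinuous_comp G (fun x => vadd x m)); auto. apply (rcontinuous_transl (fun x => x)), rcontinuous_id.
    - intros x. rewrite P. f_equal. apply proj_eq. destruct Hm; split; simpl;
      [replace (fst x + fst m - fst x) with (fst m) by ring | replace (snd x + snd m - snd x) with (snd m) by ring]; auto. }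
  destruct (Hsh (1,0)) as [b1 [[[p1 E1] [q1 F1]] H1]]. split; simpl; [exists 1%Z|exists 0%Z]; reflexivity.
  destruct (Hsh (0,1)) as [b2 [[[p2 E2] [q2 F2]] H2]]. split; simpl; [exists 0%Z|exists 1%Z]; reflexivity.
  exists (Mat2 p1 p2 q1 q2). intros x m [[p Hp] [q Hq]].
  replace (vadd x m) with (vadd (vadd x (vscale (IZR p) (1,0))) (vscale (IZR q) (0,1)))
    by (apply vec_eq; simpl; rewrite <- Hp, <- Hq; ring).
  rewrite (shift_Z G _ _ H2), (shift_Z G _ _ H1).
  destruct b1, b2; unfold mact, mat_act; simpl in *; subst. apply vec_eq; simpl; rewrite Hp, Hq; ring.
Qed.

Lemma linear_part_mact M : linear_part (mact M) M.
Proof. intros x m _. apply mact_add. Qed.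

Lemma linear_part_comp G1 G2 M1 M2 : linear_part G1 M1 -> linear_part G2 M2 ->
  linear_part (fun x => G1 (G2 x)) (mmul M1 M2).
Proof.
  intros H1 H2 x m Hm. rewrite H2, H1 by (auto using mact_is_int2). rewrite mact_mul. reflexivity.
Qed.

Lemma linear_part_iter G M k : linear_part G M -> linear_part (Nat.iter k G) (mpow M k).
Proof.
  intros H. induction k.
  - intros x m _. simpl. rewrite mact_id. reflexivity.
  - intros x m Hm. change (Nat.iter (S k) G (vadd x m)) with (G (Nat.iter k G (vadd x m))).
    change (Nat.iter (S k) G x) with (G (Nat.iter k G x)).
    rewrite IHk, H by (auto using mact_is_int2). simpl mpow. rewrite mact_mul. reflexivity.
Qed.

Lemma linear_part_transl G M w : linear_part G M -> linear_part (fun x => vadd (G x) w) M.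
Proof. intros H x m Hm. rewrite H by auto. apply vec_eq; simpl; ring. Qed.

Lemma linear_part_unique G M N : linear_part G M -> linear_part G N -> M = N.
Proof.
  intros H1 H2.
  assert (E : forall m, is_int2 m -> mact M m = mact N m).
  { intros m Hm. pose proof (H1 (0,0) m Hm). pose proof (H2 (0,0) m Hm). rewrite H in H0.
    apply (f_equal (fun v => vsub v (G (0,0)))) in H0. rewrite !vsub_vadd in H0. auto. }
  assert (Z1 : is_int2 (1,0)) by (split; simpl; [exists 1%Z|exists 0%Z]; reflexivity).
  assert (Z2 : is_int2 (0,1)) by (split; simpl; [exists 0%Z|exists 1%Z]; reflexivity).
  pose proof (E _ Z1) as A1. pose proof (E _ Z2) as A2.
  destruct M, N; unfold mact, mat_act in *; simpl in *.
  injection A1; injection A2; intros.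
  f_equal; apply eq_IZR; lra.
Qed.

(* Chain from [0] to [r] in [K] steps of size [1/K < d]. *)
Lemma bounded_on_unit_ball F d : 0 < d ->
  (forall x y, vnorm (vsub y x) < d -> vnorm (vsub (F y) (F x)) <= 1/2) ->
  exists K, forall r, vnorm r <= 1 -> vnorm (vsub (F r) (F (0,0))) <= K.
Proof.
  intros Hd Hl.
  set (K := S (Z.to_nat (up (1 / d)))).
  assert (HK : 0 < INR K) by (apply lt_0_INR; unfold K; lia).
  assert (HKd : 1 / INR K < d).
  { pose proof (archimed (1/d)) as [H1 _].
    assert (0 < 1/d) by (apply Rdiv_lt_0_compat; lra).
    assert (IZR (up (1/d)) < INR K).
    { unfold K. rewrite S_INR, INR_IZR_INZ, Z2Nat.id. lra. apply le_IZR; lra. }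
    apply Rmult_lt_reg_r with (INR K / d). apply Rdiv_lt_0_compat; lra.
    replace (1 / INR K * (INR K / d)) with (1/d) by (field; lra).
    replace (d * (INR K / d)) with (INR K) by (field; lra). lra. }
  exists (INR K / 2). intros r Hr.
  assert (Hch : forall j, (j <= K)%nat ->
            vnorm (vsub (F (vscale (INR j / INR K) r)) (F (0,0))) <= INR j / 2).
  { induction j as [|j IHj]; intros Hj.
    - simpl. unfold Rdiv. rewrite Rmult_0_l.
      replace (vscale 0 r) with (0,0) by (apply vec_eq; simpl; ring).
      replace (vsub (F (0,0)) (F (0,0))) with (vscale 0 (0,0)) by (apply vec_eq; simpl; ring).
      rewrite vnorm_scale, Rabs_R0. lra.
    - replace (vsub (F (vscale (INR (S j) / INR K) r)) (F (0,0))) with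
        (vadd (vsub (F (vscale (INR (S j) / INR K) r)) (F (vscale (INR j / INR K) r)))
              (vsub (F (vscale (INR j / INR K) r)) (F (0,0)))) by (apply vec_eq; simpl; ring).
      eapply Rle_trans. apply vnorm_triang. rewrite S_INR.
      assert (Hstep : vnorm (vsub (F (vscale (INR (S j) / INR K) r)) (F (vscale (INR j / INR K) r))) <= 1/2).
      { apply Hl. rewrite vsub_vscale_l, vnorm_scale.
        replace (INR (S j) / INR K - INR j / INR K) with (1 / INR K) by (rewrite S_INR; field; lra).
        rewrite Rabs_right by (apply Rle_ge, Rlt_le, Rdiv_lt_0_compat; lra).
        pose proof (vnorm_ge0 r).
        apply Rle_lt_trans with (1 / INR K * 1). apply Rmult_le_compat_l; auto.
        left; apply Rdiv_lt_0_compat; lra. lra. }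
      pose proof (IHj (Nat.lt_le_incl _ _ Hj)). rewrite S_INR in Hstep. lra. }
  pose proof (Hch K (le_n K)) as H1.
  rewrite Rdiv_diag in H1 by lra. replace (vscale 1 r) with r in H1 by (apply vec_eq; simpl; ring).
  exact H1.
Qed.

Lemma bounded_displacement F d B : 0 < d ->
  (forall x y, vnorm (vsub y x) < d -> vnorm (vsub (F y) (F x)) <= 1/2) -> linear_part F B ->
  exists C, forall x, vnorm (vsub (F x) (mact B x)) <= C.
Proof.
  intros Hd Hl L. destruct (bounded_on_unit_ball F d Hd Hl) as [K HK].
  exists (K + vnorm (F (0,0)) + mnorm B).
  intros x. set (r := rep (proj x)).
  assert (Hm : is_int2 (vsub x r)) by apply is_int2_rep_proj.
  replace x with (vadd r (vsub x r)) at 1 2 by (apply vec_eq; simpl; ring).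
  rewrite L by auto. rewrite mact_add.
  replace (vsub (vadd (F r) (mact B (vsub x r))) (vadd (mact B r) (mact B (vsub x r)))) with
    (vadd (vsub (F r) (F (0,0))) (vadd (F (0,0)) (vscale (-1) (mact B r)))) by (apply vec_eq; simpl; ring).
  eapply Rle_trans. apply vnorm_triang. eapply Rle_trans. apply Rplus_le_compat_l. apply vnorm_triang.
  rewrite vnorm_scale. replace (Rabs (-1)) with 1 by (unfold Rabs; destruct Rcase_abs; lra).
  assert (Hr1 : vnorm r <= 1) by apply vnorm_rep.
  pose proof (HK r Hr1). pose proof (vnorm_mact B r). pose proof (mnorm_ge0 B).
  assert (mnorm B * vnorm r <= mnorm B) by (rewrite <- (Rmult_1_r (mnorm B)) at 2; apply Rmult_le_compat_l; auto).
  lra.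
Qed.

Lemma displacement_comp H1 H2 M1 M2 C1 C2 :
  (forall x, vnorm (vsub (H1 x) (mact M1 x)) <= C1) ->
  (forall x, vnorm (vsub (H2 x) (mact M2 x)) <= C2) ->
  forall x, vnorm (vsub (H1 (H2 x)) (mact (mmul M1 M2) x)) <= C1 + mnorm M1 * C2.
Proof.
  intros B1 B2 x. rewrite mact_mul.
  replace (vsub (H1 (H2 x)) (mact M1 (mact M2 x))) with
    (vadd (vsub (H1 (H2 x)) (mact M1 (H2 x))) (mact M1 (vsub (H2 x) (mact M2 x))))
    by (unfold mact, mat_act; apply vec_eq; simpl; ring).
  eapply Rle_trans. apply vnorm_triang. apply Rplus_le_compat. auto.
  eapply Rle_trans. apply vnorm_mact. apply Rmult_le_compat_l. apply mnorm_ge0. auto.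
Qed.

Lemma displacement_iter H M C : (forall x, vnorm (vsub (H x) (mact M x)) <= C) ->
  forall k, exists Ck, forall x, vnorm (vsub (Nat.iter k H x) (mact (mpow M k) x)) <= Ck.
Proof.
  intros B k. induction k.
  - exists 0. intros x. simpl. rewrite mact_id.
    replace (vsub x x) with (vscale 0 x) by (apply vec_eq; simpl; ring). rewrite vnorm_scale, Rabs_R0. lra.
  - destruct IHk as [Ck Hk]. exists (C + mnorm M * Ck). intros x.
    rewrite Nat.iter_succ. simpl mpow. apply (displacement_comp H (Nat.iter k H) M (mpow M k)); auto.
Qed.

Lemma inverse_lifts_unimodular f finv F F' B B' :
  (forall p, f (finv p) = p) -> is_lift f F -> is_lift finv F' ->
  linear_part F B -> linear_part F' B' -> (mdet B = 1 \/ mdet B = -1)%Z.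
Proof.
  intros Hr LF LF' HB HB'.
  assert (L1 : is_lift (fun p => p) (fun x => F (F' x))).
  { replace (fun p : T2 => p) with (fun p => f (finv p)) by (apply functional_extensionality; auto).
    apply lift_comp; auto. }
  destruct (lift_unique _ _ _ L1 lift_id) as [v [_ Ev]].
  assert (LP1 : linear_part (fun x => vadd x v) (mmul B B')).
  { replace (fun x => vadd x v) with (fun x => F (F' x)) by (apply functional_extensionality; auto).
    apply linear_part_comp; auto. }
  assert (LP2 : linear_part (fun x => vadd x v) mat_one).
  { apply (linear_part_transl (fun x => x)). intros x m _. rewrite mact_id. reflexivity. }
  assert (Hd1 : (mdet B * mdet B' = 1)%Z).
  { rewrite <- mdet_mul, (linear_part_unique _ _ _ LP1 LP2). reflexivity. }
  apply Z.mul_eq_1 in Hd1. lia.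
Qed.

Lemma homeo_lift f finv : is_homeo f finv ->
  exists F B, is_lift f F /\ linear_part F B /\ (mdet B = 1 \/ mdet B = -1)%Z /\
    exists C, forall x, vnorm (vsub (F x) (mact B x)) <= C.
Proof.
  intros [_ [Hr [Hcf Hcfi]]].
  destruct (lift_exists f Hcf) as [F [LF [dF [HdF HFloc]]]].
  destruct (lift_exists finv Hcfi) as [F' [LF' _]].
  destruct (lift_linear_part f F LF) as [B HB].
  destruct (lift_linear_part finv F' LF') as [B' HB'].
  exists F, B. split; [|split; [|split]]; auto.
  - eapply inverse_lifts_unimodular; eauto.
  - eapply bounded_displacement; eauto.
Qed.

(** * Integer matrices conjugating a matrix to one of its powers *)

Section IntegerMatrixPowers.
Local Open Scope Z_scope.

(* [(al, be)] with [M^k = al M + be I] for [tr M = t] and [det M = e] (Cayley-Hamilton). *)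
Fixpoint cayley_coeffs (t e : Z) (k : nat) : Z * Z :=
  match k with
  | O => (0, 1)
  | S k' => let (al, be) := cayley_coeffs t e k' in (t * al + be, - e * al)
  end.

Lemma mpow_cayley p q r s k :
  let t := p + s in let e := p * s - q * r in
  mpow (Mat2 p q r s) k =
  Mat2 (fst (cayley_coeffs t e k) * p + snd (cayley_coeffs t e k)) (fst (cayley_coeffs t e k) * q)
      (fst (cayley_coeffs t e k) * r) (fst (cayley_coeffs t e k) * s + snd (cayley_coeffs t e k)).
Proof.
  intros t e. induction k.
  - reflexivity.
  - simpl mpow. rewrite IHk. simpl cayley_coeffs. destruct (cayley_coeffs t e k) as [al be]. simpl.
    unfold mmul; simpl. unfold t, e. f_equal; ring.
Qed.

(* [(tr M^k, tr M^(k+1))] for [tr M = t] and [det M = e]. *)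
Fixpoint power_traces (t e : Z) (k : nat) : Z * Z :=
  match k with
  | O => (2, t)
  | S k' => let (x, y) := power_traces t e k' in (y, t * y - e * x)
  end.

Lemma power_traces_spec t e k :
  fst (power_traces t e k) = fst (cayley_coeffs t e k) * t + 2 * snd (cayley_coeffs t e k) /\
  snd (power_traces t e k) = fst (cayley_coeffs t e (S k)) * t + 2 * snd (cayley_coeffs t e (S k)).
Proof.
  induction k.
  - cbn [power_traces cayley_coeffs fst snd]. split; ring.
  - cbn [power_traces]. destruct (power_traces t e k) as [x y]. cbn [power_traces cayley_coeffs fst snd] in *. destruct IHk as [H1 H2].
    cbn [cayley_coeffs] in *. destruct (cayley_coeffs t e k) as [al be]. cbn [power_traces cayley_coeffs fst snd] in *. split. auto.
    rewrite H2, H1. ring.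
Qed.

Fixpoint alt_sign (k : nat) : Z := match k with O => 1 | S k' => - alt_sign k' end.

Lemma power_traces_opp t e k : fst (power_traces (-t) e k) = alt_sign k * fst (power_traces t e k) /\
                     snd (power_traces (-t) e k) = alt_sign (S k) * snd (power_traces t e k).
Proof.
  induction k.
  - cbn [power_traces cayley_coeffs fst snd alt_sign]. split; ring.
  - cbn [power_traces]. destruct (power_traces t e k) as [x y]. destruct (power_traces (-t) e k) as [x' y'].
    cbn [power_traces cayley_coeffs fst snd alt_sign] in *. destruct IHk as [H1 H2]. split. auto. rewrite H1, H2. ring.
Qed.

Lemma alt_sign_cases k : alt_sign k = 1 \/ alt_sign k = -1.
Proof. induction k; simpl; lia. Qed.

Lemma power_traces_increasing t e : (e = -1 /\ 1 <= t) \/ (e = 1 /\ 3 <= t) ->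
  forall k, (1 <= k)%nat -> 1 <= fst (power_traces t e k) < snd (power_traces t e k).
Proof.
  intros Ht k Hk. induction Hk.
  - simpl. nia.
  - simpl power_traces. destruct (power_traces t e m) as [x y]. simpl in *. nia.
Qed.

Lemma power_traces_gt t e : (e = -1 /\ 1 <= t) \/ (e = 1 /\ 3 <= t) ->
  forall k, (2 <= k)%nat -> t < fst (power_traces t e k).
Proof.
  intros Ht k Hk. induction Hk.
  - simpl. nia.
  - pose proof (power_traces_increasing t e Ht m ltac:(lia)). simpl power_traces. destruct (power_traces t e m) as [x y]. simpl in *. lia.
Qed.

Lemma power_traces_abs_gt t e : (e = -1 /\ t <> 0) \/ (e = 1 /\ 3 <= Z.abs t) ->
  forall k, (2 <= k)%nat -> Z.abs t < Z.abs (fst (power_traces t e k)).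
Proof.
  intros Ht k Hk. destruct (Z_le_gt_dec 0 t).
  - pose proof (power_traces_gt t e ltac:(lia) k Hk). lia.
  - pose proof (power_traces_gt (-t) e ltac:(lia) k Hk). destruct (power_traces_opp (-t) e k) as [H1 _].
    replace (- - t) with t in H1 by ring. rewrite H1. destruct (alt_sign_cases k) as [-> | ->]; lia.
Qed.

Lemma square_ratio_pos X Y D : 0 < Y -> X * X = D * (Y * Y) -> exists k, D = k * k.
Proof.
  intros HY HX.
  set (g := Z.gcd X Y).
  assert (Hg0 : 0 < g).
  { pose proof (Z.gcd_nonneg X Y). assert (g <> 0). { intro E. apply Z.gcd_eq_0 in E. lia. } fold g in H. lia. }
  destruct (Z.gcd_divide_l X Y) as [x Hx]. destruct (Z.gcd_divide_r X Y) as [y Hy]. fold g in Hx, Hy.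
  pose proof (Zis_gcd_rel_prime X Y g ltac:(lia) ltac:(lia) (Zgcd_is_gcd X Y)) as Hr.
  rewrite Hx, Hy, !Z.div_mul in Hr by lia.
  assert (E : x * x = D * (y * y)).
  { apply (Z.mul_cancel_l _ _ (g * g)). nia. rewrite Hx, Hy in HX. nia. }
  assert (Hyd : (y | x * x)) by (exists (D * y); rewrite E; ring).
  assert (Hrp : rel_prime y (x * x)) by (apply rel_prime_mult; apply rel_prime_sym; auto).
  assert (Hy1 : (y | 1)).
  { destruct Hrp as [_ _ H]. apply H; [exists 1; ring | auto]. }
  apply Z.divide_1_r in Hy1. exists x. destruct Hy1 as [-> | ->]; lia.
Qed.

Lemma square_ratio X Y D : Y <> 0 -> X * X = D * (Y * Y) -> exists k, D = k * k.
Proof.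
  intros HY HX. destruct (Z_le_gt_dec 0 Y).
  - apply (square_ratio_pos X Y D); auto; lia.
  - apply (square_ratio_pos X (-Y) D). lia. nia.
Qed.

(* [u] and [A u] are never parallel: [(a + d)^2 - 4] is not a square, so [A] has no rational
   eigenvalue. *)
Lemma hyperbolic_no_rational_eigvec a b c d u1 u2 : a * d - b * c = 1 -> Z.abs (a + d) > 2 ->
  (u1 <> 0 \/ u2 <> 0) -> u1 * (c * u1 + d * u2) - u2 * (a * u1 + b * u2) <> 0.
Proof.
  intros Hdet Htr Hu E.
  destruct (Z.eq_dec u2 0) as [H2|H2].
  - subst. assert (Hc : c * (u1 * u1) = 0) by (rewrite <- E; ring).
    apply Z.mul_eq_0 in Hc. destruct Hc as [Hc|Hc]; [|apply Z.mul_eq_0 in Hc; lia].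
    subst. replace (a * d - b * 0) with (a * d) in Hdet by ring.
    pose proof Hdet as H'. apply Z.mul_eq_1 in H'. destruct H' as [Ha|Ha]; subst a; lia.
  - assert (Hsq : (2*c*u1 + (d - a)*u2) * (2*c*u1 + (d-a)*u2) = ((a+d)*(a+d) - 4) * (u2 * u2)).
    { assert (Id : (2*c*u1 + (d - a)*u2) * (2*c*u1 + (d-a)*u2) - ((a+d)*(a+d) - 4) * (u2 * u2) =
        4 * c * (u1 * (c * u1 + d * u2) - u2 * (a * u1 + b * u2)) - 4 * (a*d - b*c - 1) * (u2 * u2)) by ring.
      rewrite E, Hdet in Id. lia. }
    destruct (square_ratio _ _ _ H2 Hsq) as [k Hk].
    assert (0 <= k * k) by nia.
    set (T := Z.abs (a + d)) in *. assert (T * T = (a+d)*(a+d)) by (unfold T; destruct (Z.abs_spec (a+d)) as [[_ ->]|[_ ->]]; ring).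
    set (K := Z.abs k). assert (K * K = k * k) by (unfold K; destruct (Z.abs_spec k) as [[_ ->]|[_ ->]]; ring).
    assert (0 <= K) by (unfold K; lia).
    assert (T * T - K * K = 4) by lia.
    assert (K < T) by nia. assert (T - 1 < K) by nia. lia.
Qed.

Lemma similar_trace (A M N : mat2) : mdet A <> 0 -> mmul A M = mmul N A -> mtr M = mtr N.
Proof.
  destruct A as [a b c d], M as [p q r s], N as [p' q' r' s'].
  unfold mdet, mtr, mmul; cbn. intros Hdet E. injection E as E1 E2 E3 E4.
  assert (H : (a * d - b * c) * ((p' + s') - (p + s)) = 0).
  { transitivity ((p' * a + q' * c - (a * p + b * r)) * d + (p' * b + q' * d - (a * q + b * s)) * (- c)
      + (r' * a + s' * c - (c * p + d * r)) * (- b) + (r' * b + s' * d - (c * q + d * s)) * a);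
    [ring|]. rewrite <- E1, <- E2, <- E3, <- E4. ring. }
  apply Z.mul_eq_0 in H. lia.
Qed.

Lemma mtr_mpow B k : mtr (mpow B k) = fst (power_traces (mtr B) (mdet B) k).
Proof.
  destruct B as [p q r s]. rewrite mpow_cayley. unfold mtr, mdet; cbn.
  destruct (power_traces_spec (p + s) (p * s - q * r) k) as [-> _]. ring.
Qed.

Lemma small_trace_mpow_12 B : (mdet B = 1 /\ Z.abs (mtr B) <= 1) \/ (mdet B = -1 /\ mtr B = 0) ->
  mpow B 12 = mat_one.
Proof.
  destruct B as [p q r s]. rewrite mpow_cayley. unfold mdet, mtr; cbn -[cayley_coeffs]. intros Hsmall.
  assert (H12 : cayley_coeffs (p + s) (p * s - q * r) 12 = (0, 1)).
  { destruct Hsmall as [[-> Ht] | [-> ->]]; [|reflexivity].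
    assert (p + s = -1 \/ p + s = 0 \/ p + s = 1) as [-> | [-> | ->]] by lia; reflexivity. }
  rewrite H12. unfold mat_one. cbn. f_equal; ring.
Qed.

(* If [tr B = 2 eps], [N := B - eps I] is nilpotent and [A N = al N A]; a nonzero column
   of [N] would then be a rational eigenvector of [A]. *)
Lemma parabolic_conj_power (a b c d : Z) (B : mat2) (n : nat) :
  a * d - b * c = 1 -> Z.abs (a + d) > 2 -> mdet B = 1 -> Z.abs (mtr B) = 2 ->
  mmul (Mat2 a b c d) B = mmul (mpow B n) (Mat2 a b c d) -> mpow B 2 = mat_one.
Proof.
  intros Hdet Htr HdB Hpar HAB.
  assert (HdA : mdet (Mat2 a b c d) <> 0) by (change (a * d - b * c <> 0); lia).
  pose proof (similar_trace _ _ _ HdA HAB) as Htrn.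
  destruct B as [p q r s]. unfold mdet, mtr in *; cbn in *.
  rewrite mpow_cayley in HAB, Htrn.
  destruct (cayley_coeffs (p + s) (p * s - q * r) n) as [al be]. cbn in HAB, Htrn.
  unfold mmul in HAB; cbn in HAB. injection HAB; clear HAB; intros E4 E3 E2 E1.
  set (eps := (p + s) / 2).
  assert (Heps : p + s = 2 * eps /\ eps * eps = 1).
  { unfold eps. destruct (Z.abs_spec (p + s)) as [[_ H]|[_ H]]; rewrite H in Hpar;
    [replace (p + s) with 2 by lia | replace (p + s) with (-2) by lia]; split; reflexivity. }
  destruct Heps as [Ht2 Hee].
  assert (Hbe : be = eps - al * eps) by nia.
  assert (F1 : a * (p - eps) + b * r = al * ((p - eps) * a + q * c)) by (subst be; nia).
  assert (F2 : c * (p - eps) + d * r = al * (r * a + (s - eps) * c)) by (subst be; nia).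
  assert (F3 : a * q + b * (s - eps) = al * ((p - eps) * b + q * d)) by (subst be; nia).
  assert (F4 : c * q + d * (s - eps) = al * (r * b + (s - eps) * d)) by (subst be; nia).
  assert (HdN : (p - eps) * (s - eps) - q * r = 0) by nia.
  destruct (Z.eq_dec (p - eps) 0) as [Hp0|Hp0]; [destruct (Z.eq_dec r 0) as [Hr0|Hr0]|].
  - destruct (Z.eq_dec q 0) as [Hq0|Hq0]; [destruct (Z.eq_dec (s - eps) 0) as [Hs0|Hs0]|].
    + cbn. unfold mmul, mat_one; cbn.
      replace p with eps by lia. replace s with eps by lia. subst q r. f_equal; nia.
    + exfalso. apply (hyperbolic_no_rational_eigvec a b c d q (s - eps) Hdet Htr ltac:(lia)).
      rewrite F3, F4. transitivity (- al * b * ((p - eps) * (s - eps) - q * r)); [ring | rewrite HdN; ring].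
    + exfalso. apply (hyperbolic_no_rational_eigvec a b c d q (s - eps) Hdet Htr ltac:(lia)).
      rewrite F3, F4. transitivity (- al * b * ((p - eps) * (s - eps) - q * r)); [ring | rewrite HdN; ring].
  - exfalso. apply (hyperbolic_no_rational_eigvec a b c d (p - eps) r Hdet Htr ltac:(lia)).
    rewrite F1, F2. transitivity (al * c * ((p - eps) * (s - eps) - q * r)); [ring | rewrite HdN; ring].
  - exfalso. apply (hyperbolic_no_rational_eigvec a b c d (p - eps) r Hdet Htr ltac:(lia)).
    rewrite F1, F2. transitivity (al * c * ((p - eps) * (s - eps) - q * r)); [ring | rewrite HdN; ring].
Qed.

(* Since [A B A^-1 = B^n], [tr B^n = tr B]; the traces of powers of a unimodular matrix
   with [|tr| > 2] (or nonzero trace and determinant -1) grow, so [B] is elliptic or parabolic. *)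
Lemma conj_power_finite_order (a b c d : Z) (B : mat2) (n : nat) :
  a * d - b * c = 1 -> Z.abs (a + d) > 2 -> (2 <= n)%nat ->
  (mdet B = 1 \/ mdet B = -1) ->
  mmul (Mat2 a b c d) B = mmul (mpow B n) (Mat2 a b c d) ->
  exists q, (1 <= q)%nat /\ mpow B q = mat_one.
Proof.
  intros Hdet Htr Hn HdB HAB.
  assert (HdA : mdet (Mat2 a b c d) <> 0) by (change (a * d - b * c <> 0); lia).
  pose proof (similar_trace _ _ _ HdA HAB) as Htrn.
  rewrite mtr_mpow in Htrn.
  assert (Hcases : ((mdet B = -1 /\ mtr B <> 0) \/ (mdet B = 1 /\ 3 <= Z.abs (mtr B))) \/
                   (mdet B = 1 /\ Z.abs (mtr B) = 2) \/
                   ((mdet B = 1 /\ Z.abs (mtr B) <= 1) \/ (mdet B = -1 /\ mtr B = 0))) by lia.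
  destruct Hcases as [Hhyp | [[He Hpar] | Hell]].
  - exfalso. pose proof (power_traces_abs_gt (mtr B) (mdet B) Hhyp n Hn). lia.
  - exists 2%nat. split; [lia|]. exact (parabolic_conj_power a b c d B n Hdet Htr He Hpar HAB).
  - exists 12%nat. split; [lia|]. exact (small_trace_mpow_12 B Hell).
Qed.

End IntegerMatrixPowers.

Definition commutes_Z2 (H : R * R -> R * R) : Prop :=
  forall x m, is_int2 m -> H (vadd x m) = vadd (H x) m.

Lemma linear_part_one_commutes_Z2 H : linear_part H mat_one -> commutes_Z2 H.
Proof. intros L x m Hm. rewrite L by auto. rewrite mact_id. reflexivity. Qed.

Lemma commutes_Z2_iter H k : commutes_Z2 H -> commutes_Z2 (Nat.iter k H).
Proof.
  intros T. induction k; intros x m Hm. reflexivity.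
  rewrite !Nat.iter_succ, IHk, T by auto. reflexivity.
Qed.

Lemma iter_transl_out H v k x : commutes_Z2 H -> is_int2 v ->
  Nat.iter k (fun y => vadd (H y) v) x = vadd (Nat.iter k H x) (vscale (INR k) v).
Proof.
  intros T Hv. induction k.
  - simpl. apply vec_eq; simpl; ring.
  - rewrite !Nat.iter_succ, IHk, T by (apply is_int2_scale_nat; auto).
    rewrite S_INR. apply vec_eq; simpl; ring.
Qed.

(* Solve [(A - m I) w = q v] with [w] integral by the adjugate of [A - m I]. *)
Lemma shifted_mat_act_solve (a b c d m : Z) v : ((a - m) * (d - m) - b * c <> 0)%Z -> is_int2 v ->
  exists q w, (1 <= q)%nat /\ is_int2 w /\
    vadd (mat_act a b c d w) (vscale (- IZR m) w) = vscale (INR q) v.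
Proof.
  intros HD [[v1 Hv1] [v2 Hv2]].
  set (D := ((a - m) * (d - m) - b * c)%Z) in *. set (sg := Z.sgn D).
  exists (Z.to_nat (Z.abs D)),
    (IZR (sg * ((d - m) * v1 - b * v2)), IZR (sg * (- c * v1 + (a - m) * v2))).
  split; [lia|]. split; [split; apply is_int_IZR|].
  assert (Hq : INR (Z.to_nat (Z.abs D)) = IZR (sg * D)).
  { unfold sg. rewrite INR_IZR_INZ, Z2Nat.id by lia. f_equal. rewrite Z.mul_comm, Z.sgn_abs. reflexivity. }
  rewrite Hq. destruct v as [v1' v2']. simpl in Hv1, Hv2. subst v1' v2'.
  unfold mat_act, vadd, vscale; simpl. apply vec_eq; simpl;
  rewrite <- ?opp_IZR, <- ?mult_IZR, <- ?plus_IZR; f_equal; unfold D; ring.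
Qed.

(* [A F1 A^-1 = F1^n + v] with [v] integral; composing a power [F1^q] with a suitable integral
   translation absorbs [v], because [(A - n I) w = q v] has an integral solution. *)
Lemma exact_conj_relation (a b c d : Z) (n : nat) F1 v :
  (a * d - b * c = 1)%Z -> (2 <= n)%nat -> commutes_Z2 F1 -> is_int2 v ->
  (forall x, mact (Mat2 a b c d) (F1 (mact (Mat2 d (-b) (-c) a) x)) = vadd (Nat.iter n F1 x) v) ->
  exists q w, (1 <= q)%nat /\ is_int2 w /\
    forall x, mact (Mat2 a b c d) (vadd (Nat.iter q F1 (mact (Mat2 d (-b) (-c) a) x)) (vscale (-1) w))
              = Nat.iter n (fun y => vadd (Nat.iter q F1 y) (vscale (-1) w)) x.
Proof.
  intros Hdet Hn T Hv Hrel.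
  assert (HD : ((a - Z.of_nat n) * (d - Z.of_nat n) - b * c <> 0)%Z).
  { intro E0. assert (E1 : (Z.of_nat n * (a + d - Z.of_nat n) = 1)%Z) by lia.
    apply Z.mul_eq_1 in E1. lia. }
  destruct (shifted_mat_act_solve a b c d (Z.of_nat n) v HD Hv) as [q [w [Hq [Hw HMw]]]].
  rewrite <- INR_IZR_INZ in HMw.
  exists q, w. split; [|split]; auto. intros x.
  assert (Hmw : is_int2 (vscale (-1) w)) by exact (is_int2_scale_Z (-1) w Hw).
  replace (mact (Mat2 a b c d) (vadd _ _)) with
    (vadd (mact (Mat2 a b c d) (Nat.iter q F1 (mact (Mat2 d (-b) (-c) a) x)))
          (vscale (-1) (mact (Mat2 a b c d) w))) by (unfold mact, mat_act; apply vec_eq; simpl; ring).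
  rewrite (iter_conj _ _ _ (fun y => vadd (Nat.iter n F1 y) v)) by (intros; auto using mact_adj_l, mact_adj_r).
  rewrite iter_transl_out, iter_transl_out, iter_comm by auto using commutes_Z2_iter.
  unfold mact in *; simpl in *. rewrite <- HMw. apply vec_eq; simpl; ring.
Qed.

Lemma lift_injective g G : is_lift g G -> commutes_Z2 G ->
  (forall p q, g p = g q -> p = q) -> forall x y, G x = G y -> x = y.
Proof.
  intros [_ HG] TG ginj x y E.
  assert (Hm : is_int2 (vsub y x)).
  { apply proj_eq_inv, ginj. rewrite <- !HG, E. reflexivity. }
  pose proof (TG x _ Hm) as E2.
  replace (vadd x (vsub y x)) with y in E2 by (apply vec_eq; simpl; ring).
  rewrite E2 in E. destruct Hm as [[z1 E3] [z2 E4]].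
  apply (f_equal fst) in E as E5; apply (f_equal snd) in E as E6. simpl in E5, E6.
  apply vec_eq; lra.
Qed.

(** * Continuous injective maps of the line *)

Lemma continuity_affine p k : continuity (fun s => p + s * k).
Proof.
  intros s. unfold continuity_pt, continue_in, limit1_in, limit_in, D_x, no_cond.
  simpl. unfold R_dist. intros eps Heps. exists (eps / (Rabs k + 1)).
  pose proof (Rabs_pos k). split. apply Rdiv_lt_0_compat; lra.
  intros y [_ Hy].
  replace (p + y * k - (p + s * k)) with ((y - s) * k) by ring. rewrite Rabs_mult.
  apply Rle_lt_trans with (Rabs (y - s) * (Rabs k + 1)). apply Rmult_le_compat_l; auto using Rabs_pos; lra.
  apply Rmult_lt_reg_r with (/ (Rabs k + 1)). apply Rinv_0_lt_compat; lra.
  rewrite Rmult_assoc, Rinv_r, Rmult_1_r by lra. apply Hy.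
Qed.

Lemma continuity_comp_affine psi p k : continuity psi -> continuity (fun s => psi (p + s * k)).
Proof. intros H. exact (continuity_comp (fun s => p + s * k) psi (continuity_affine p k) H). Qed.

(* If [psi] reversed the order of one pair and preserved it for another, moving the first pair
   linearly to the second would give, by the IVT, two distinct points with the same image. *)
Lemma continuous_injective_monotone (psi : R -> R) : continuity psi -> (forall x y, psi x = psi y -> x = y) ->
  (forall x y, x < y -> psi x < psi y) \/ (forall x y, x < y -> psi y < psi x).
Proof.
  intros Hc Hi. destruct (classic (forall x y, x < y -> psi x < psi y)) as [H|Hn]; [left; auto|right].
  apply not_all_ex_not in Hn. destruct Hn as [x' Hn]. apply not_all_ex_not in Hn. destruct Hn as [y' Hn].
  apply imply_to_and in Hn. destruct Hn as [Hxy' Hn].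
  assert (Hd' : psi y' < psi x').
  { destruct (Rtotal_order (psi x') (psi y')) as [|[E|]]; try lra. apply Hi in E. lra. }
  intros x y Hxy. destruct (Rtotal_order (psi x) (psi y)) as [Hlt|[E|Hgt]]; auto.
  2: { apply Hi in E. lra. }
  exfalso.
  destruct (IVT (fun s => psi (x + s * (x' - x)) - psi (y + s * (y' - y))) 0 1) as [s [Hs Hs0]].
  - apply continuity_minus; apply continuity_comp_affine; auto.
  - lra.
  - replace (x + 0 * (x' - x)) with x by ring. replace (y + 0 * (y' - y)) with y by ring. lra.
  - replace (x + 1 * (x' - x)) with x' by ring. replace (y + 1 * (y' - y)) with y' by ring. lra.
  - assert (E : psi (x + s * (x' - x)) = psi (y + s * (y' - y))) by lra.
    apply Hi in E.
    assert (E2 : (1 - s) * (y - x) + s * (y' - x') = 0) by lra.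
    assert (0 <= s * (y' - x')) by (apply Rmult_le_pos; lra).
    destruct (Rlt_le_dec s 1).
    + assert (0 < (1 - s) * (y - x)) by (apply Rmult_lt_0_compat; lra). lra.
    + assert (s = 1) by lra. subst s. lra.
Qed.

Lemma monotone_near_identity_iterates_id (chi : R -> R) :
  (forall x y, x <= y -> chi x <= chi y) ->
  (forall eps, 0 < eps -> exists N, (1 <= N)%nat /\ forall s, Rabs (Nat.iter N chi s - s) <= eps) ->
  forall t, chi t = t.
Proof.
  intros Hmono Hclose t.
  destruct (Rtotal_order (chi t) t) as [Hlt|[E|Hgt]]; auto; exfalso.
  - assert (Hdown : forall m, Nat.iter (S m) chi t <= chi t).
    { induction m as [|m IH]; simpl in *; [lra|]. apply Hmono.
      eapply Rle_trans; [exact IH | lra]. }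
    destruct (Hclose ((t - chi t) / 2) ltac:(lra)) as [[|N] [HN1 HN]]; [lia|].
    specialize (HN t). pose proof (Hdown N). rewrite Rabs_minus_sym in HN.
    pose proof (Rle_abs (t - Nat.iter (S N) chi t)). lra.
  - assert (Hup : forall m, chi t <= Nat.iter (S m) chi t).
    { induction m as [|m IH]; simpl in *; [lra|]. apply Hmono.
      eapply Rle_trans; [|exact IH]. lra. }
    destruct (Hclose ((chi t - t) / 2) ltac:(lra)) as [[|N] [HN1 HN]]; [lia|].
    specialize (HN t). pose proof (Hup N).
    pose proof (Rle_abs (Nat.iter (S N) chi t - t)). lra.
Qed.

(* Continuous injective maps of R are strictly monotone, so [psi ∘ psi] is increasing. *)
Lemma involution_of_near_identity_iterates (psi : R -> R) :
  continuity psi -> (forall x y, psi x = psi y -> x = y) ->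
  (forall eps, 0 < eps -> exists N, (1 <= N)%nat /\ forall t, Rabs (Nat.iter N psi t - t) <= eps) ->
  forall t, psi (psi t) = t.
Proof.
  intros Hc Hi Hsmall.
  apply (monotone_near_identity_iterates_id (fun s => psi (psi s))).
  - intros x y [Hxy|<-]; [|lra]. left.
    destruct (continuous_injective_monotone psi Hc Hi) as [H|H]; auto.
  - intros eps Heps. destruct (Hsmall (eps / 2) ltac:(lra)) as [N [HN1 HN]].
    exists N. split; auto. intros s.
    replace (Nat.iter N (fun s => psi (psi s)) s) with (Nat.iter N psi (Nat.iter N psi s))
      by (rewrite <- Nat.iter_add, <- (iter_mul psi N 2); f_equal; lia).
    replace (Nat.iter N psi (Nat.iter N psi s) - s) with
      ((Nat.iter N psi (Nat.iter N psi s) - Nat.iter N psi s) + (Nat.iter N psi s - s)) by ring.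
    eapply Rle_trans. apply Rabs_triang. pose proof (HN s). pose proof (HN (Nat.iter N psi s)). lra.
Qed.

(** * Lifts conjugated by a hyperbolic matrix to their powers *)

Lemma eigenvalue_char_poly a b c d lam : (a * d - b * c = 1)%Z -> is_eigenvalue a b c d lam ->
  lam * lam - IZR (a + d) * lam + 1 = 0.
Proof.
  intros Hdet [[v1 v2] [Hv E]]. unfold mat_act in E; simpl in E. injection E as E1 E2.
  pose proof (det_IZR a b c d Hdet) as Hd. rewrite plus_IZR.
  set (P := lam * lam - (IZR a + IZR d) * lam + 1).
  assert (H1 : P * v1 = 0).
  { transitivity ((lam - IZR d) * ((lam - IZR a) * v1 - IZR b * v2) + IZR b * ((lam - IZR d) * v2 - IZR c * v1)
       + (1 - (IZR a * IZR d - IZR b * IZR c)) * v1). unfold P; ring.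
    rewrite Hd. replace ((lam - IZR a) * v1 - IZR b * v2) with 0 by lra.
    replace ((lam - IZR d) * v2 - IZR c * v1) with 0 by lra. ring. }
  assert (H2 : P * v2 = 0).
  { transitivity ((lam - IZR a) * ((lam - IZR d) * v2 - IZR c * v1) + IZR c * ((lam - IZR a) * v1 - IZR b * v2)
       + (1 - (IZR a * IZR d - IZR b * IZR c)) * v2). unfold P; ring.
    rewrite Hd. replace ((lam - IZR a) * v1 - IZR b * v2) with 0 by lra.
    replace ((lam - IZR d) * v2 - IZR c * v1) with 0 by lra. ring. }
  destruct (Req_dec P 0) as [|HP]; auto. exfalso. apply Hv.
  apply Rmult_integral in H1. apply Rmult_integral in H2.
  destruct H1 as [|H1]; [contradiction|]. destruct H2 as [|H2]; [contradiction|]. subst; reflexivity.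
Qed.

Lemma geometric_bound_zero lam r K z : 0 < r -> r < lam -> 0 <= z ->
  (forall k, lam ^ k * z <= r ^ k * K) -> z = 0.
Proof.
  intros Hr Hl Hz H. destruct Hz as [Hz|]; auto. exfalso.
  assert (Hq : Rabs (lam / r) > 1).
  { rewrite Rabs_right. apply Rmult_lt_reg_r with r; auto. unfold Rdiv.
    rewrite Rmult_assoc, Rinv_l, Rmult_1_r, Rmult_1_l by lra. auto.
    apply Rle_ge, Rlt_le, Rdiv_lt_0_compat; lra. }
  destruct (Pow_x_infinity (lam / r) Hq (K / z + 1)) as [N HN].
  specialize (HN N (le_n N)). specialize (H N).
  assert (Hp : 0 < (lam / r) ^ N) by (apply pow_lt, Rdiv_lt_0_compat; lra).
  rewrite Rabs_right in HN by lra.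
  unfold Rdiv in HN. rewrite Rpow_mult_distr, pow_inv in HN.
  assert (0 < r ^ N) by (apply pow_lt; auto).
  assert (lam ^ N * / r ^ N * z <= K).
  { apply Rmult_le_reg_l with (r ^ N); auto.
    replace (r ^ N * (lam ^ N * / r ^ N * z)) with (lam ^ N * z) by (field; lra). lra. }
  assert ((K * / z + 1) * z <= K).
  { eapply Rle_trans. 2: apply H1. apply Rmult_le_compat_r; lra. }
  replace ((K * / z + 1) * z) with (K + z) in H2 by (field; lra). lra.
Qed.

Lemma iter_displacement_bound (G : R * R -> R * R) (l : R * R -> R) K C m z : 0 <= K ->
  (forall x y, Rabs (l x - l y) <= K * vnorm (vsub x y)) ->
  (forall x, vnorm (vsub (G x) x) <= C) ->
  Rabs (l (Nat.iter m G z) - l z) <= INR m * (K * C).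
Proof.
  intros HK Hl HC. induction m as [|m IH].
  { simpl. rewrite Rminus_diag, Rabs_R0. lra. }
  rewrite Nat.iter_succ, S_INR.
  replace (l (G (Nat.iter m G z)) - l z) with
    ((l (G (Nat.iter m G z)) - l (Nat.iter m G z)) + (l (Nat.iter m G z) - l z)) by ring.
  eapply Rle_trans. apply Rabs_triang.
  pose proof (Hl (G (Nat.iter m G z)) (Nat.iter m G z)).
  pose proof (HC (Nat.iter m G z)).
  assert (K * vnorm (vsub (G (Nat.iter m G z)) (Nat.iter m G z)) <= K * C)
    by (apply Rmult_le_compat_l; auto).
  lra.
Qed.

(** [eig_coord a c r] is the linear form given by the left eigenvector [(c, r - a)] of
    [[a, b], [c, d]] for its eigenvalue [r]; [eig_point a c r s u v] is the point whose
    coordinates for the eigenvalues [r] and [s] are [u] and [v]. *)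
Definition eig_coord (a c r : R) (x : R * R) : R := c * fst x + (r - a) * snd x.

Definition eig_point (a c r s u v : R) : R * R :=
  ((u - (r - a) * ((u - v) / (r - s))) / c, (u - v) / (r - s)).

Lemma eig_coord_lipschitz a c r x y :
  Rabs (eig_coord a c r x - eig_coord a c r y) <= (Rabs c + Rabs (r - a)) * vnorm (vsub x y).
Proof.
  replace (eig_coord a c r x - eig_coord a c r y) with
    (c * fst (vsub x y) + (r - a) * snd (vsub x y)) by (unfold eig_coord, vsub; simpl; ring).
  eapply Rle_trans. apply Rabs_triang. rewrite !Rabs_mult.
  pose proof (vnorm_fst (vsub x y)). pose proof (vnorm_snd (vsub x y)).
  pose proof (Rabs_pos c). pose proof (Rabs_pos (r - a)).
  assert (Rabs c * Rabs (fst (vsub x y)) <= Rabs c * vnorm (vsub x y)) by (apply Rmult_le_compat_l; auto).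
  assert (Rabs (r - a) * Rabs (snd (vsub x y)) <= Rabs (r - a) * vnorm (vsub x y))
    by (apply Rmult_le_compat_l; auto).
  lra.
Qed.

Lemma eig_coord_mat_act (a b c d : Z) r x : (a * d - b * c = 1)%Z ->
  r * r - IZR (a + d) * r + 1 = 0 ->
  eig_coord (IZR a) (IZR c) r (mat_act a b c d x) = r * eig_coord (IZR a) (IZR c) r x.
Proof.
  intros Hdet Hr. pose proof (det_IZR a b c d Hdet) as Hdet'. rewrite plus_IZR in Hr.
  unfold eig_coord, mat_act; simpl.
  transitivity (r * (IZR c * fst x + (r - IZR a) * snd x)
     - snd x * (r * r - (IZR a + IZR d) * r + 1) - snd x * (IZR a * IZR d - IZR b * IZR c - 1)).
  { ring. }
  rewrite Hr, Hdet'. ring.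
Qed.

Lemma eig_coord_injective a c r s x y : c <> 0 -> r <> s ->
  eig_coord a c r x = eig_coord a c r y -> eig_coord a c s x = eig_coord a c s y -> x = y.
Proof.
  unfold eig_coord. intros Hc Hrs E1 E2.
  assert (E3 : (r - s) * (snd x - snd y) = 0) by lra.
  apply Rmult_integral in E3. destruct E3 as [E3|E3]; [lra|].
  assert (E4 : c * (fst x - fst y) = 0) by nra.
  apply Rmult_integral in E4. destruct E4 as [E4|E4]; [contradiction|].
  apply vec_eq; lra.
Qed.

Lemma eig_coord_point_l a c r s u v : c <> 0 -> r <> s -> eig_coord a c r (eig_point a c r s u v) = u.
Proof. intros. unfold eig_coord, eig_point; simpl. field. split; lra. Qed.

Lemma eig_coord_point_r a c r s u v : c <> 0 -> r <> s -> eig_coord a c s (eig_point a c r s u v) = v.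
Proof. intros. unfold eig_coord, eig_point; simpl. field. split; lra. Qed.

Lemma eig_point_line a c r s u v : c <> 0 -> r <> s ->
  eig_point a c r s u v = vadd (eig_point a c r s u 0) (vscale v (eig_point a c r s 0 1)).
Proof. intros. unfold eig_point, vadd, vscale; apply vec_eq; simpl; field; try split; lra. Qed.

Lemma hyperbolic_offdiag_nonzero a b c d : (a * d - b * c = 1)%Z -> (Z.abs (a + d) > 2)%Z -> IZR c <> 0.
Proof.
  intros Hdet Htr E. apply eq_IZR_R0 in E. subst c.
  replace (a * d - b * 0)%Z with (a * d)%Z in Hdet by ring.
  pose proof (Z.mul_eq_1 _ _ Hdet) as [Ha|Ha]; subst a; lia.
Qed.

Section HyperbolicConjugacyInvolution.

Variables (a b c d : Z) (lam : R) (n : nat) (G : R * R -> R * R) (C : R).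
Hypotheses (Hdet : (a * d - b * c = 1)%Z) (Htr : (Z.abs (a + d) > 2)%Z) (Hn : (2 <= n)%nat)
  (Heig : lam * lam - IZR (a + d) * lam + 1 = 0) (Hlam : lam > INR n)
  (Hcont : rcontinuous G) (Hinj : forall x y, G x = G y -> x = y)
  (Hbd : forall x, vnorm (vsub (G x) x) <= C)
  (Hrel : forall x, mact (Mat2 a b c d) (G (mact (Mat2 d (-b) (-c) a) x)) = Nat.iter n G x).

Local Notation A := (Mat2 a b c d).
Local Notation mu := (IZR (a + d) - lam).
Local Notation ucoord := (eig_coord (IZR a) (IZR c) lam).
Local Notation scoord := (eig_coord (IZR a) (IZR c) mu).
Local Notation KU := (Rabs (IZR c) + Rabs (lam - IZR a)).
Local Notation KS := (Rabs (IZR c) + Rabs (mu - IZR a)).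

Lemma stable_eigenvalue : mu * lam = 1 /\ 0 < mu < 1 /\ mu * mu - IZR (a + d) * mu + 1 = 0.
Proof.
  assert (HnR : 2 <= INR n) by (replace 2 with (INR 2) by (simpl; ring); apply le_INR; auto).
  assert (Hmu : mu * lam = 1) by nra.
  repeat split; auto; try (apply Rmult_lt_reg_r with lam; lra). nra.
Qed.

Lemma eig_coord_iter_mact r k y : r * r - IZR (a + d) * r + 1 = 0 ->
  eig_coord (IZR a) (IZR c) r (Nat.iter k (mact A) y) = r ^ k * eig_coord (IZR a) (IZR c) r y.
Proof.
  intros Hr. induction k as [|k IH]; simpl; [ring|].
  unfold mact at 1; simpl. rewrite eig_coord_mat_act, IH by auto. ring.
Qed.

Lemma iter_pow_conj k y : Nat.iter (n ^ k) G (Nat.iter k (mact A) y) = Nat.iter k (mact A) (G y).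
Proof.
  apply iter_conj_pow with (Pi := mact (Mat2 d (-b) (-c) a)); auto.
  intros; apply mact_adj_l; auto.
Qed.

(* The unstable coordinate of [G^(n^k) (A^k y)] moves by at most [n^k K C], but by
   [lam^k] times the displacement at [y], and [lam > n]. *)
Lemma ucoord_invariant y : ucoord (G y) = ucoord y.
Proof.
  assert (KU0 : 0 <= KU) by (pose proof (Rabs_pos (IZR c)); pose proof (Rabs_pos (lam - IZR a)); lra).
  assert (Hv : Rabs (ucoord (G y) - ucoord y) = 0).
  { assert (HnR : 0 < INR n) by (apply lt_0_INR; lia).
    apply (geometric_bound_zero lam (INR n) (KU * C)); [lra | lra | apply Rabs_pos |].
    intros k. rewrite <- (Rabs_right (lam ^ k)) by (apply Rle_ge, pow_le; lra).
    rewrite <- Rabs_mult, <- pow_INR.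
    replace (lam ^ k * (ucoord (G y) - ucoord y)) with
      (ucoord (Nat.iter (n ^ k) G (Nat.iter k (mact A) y)) - ucoord (Nat.iter k (mact A) y))
      by (rewrite iter_pow_conj, !eig_coord_iter_mact by auto; ring).
    apply iter_displacement_bound; auto. apply eig_coord_lipschitz. }
  destruct (Req_dec (ucoord (G y) - ucoord y) 0) as [Hz|Hz]; [lra|].
  apply Rabs_no_R0 in Hz. contradiction.
Qed.

Lemma scoord_near_identity eps : 0 < eps ->
  exists N, (1 <= N)%nat /\ forall x, Rabs (scoord (Nat.iter N G x) - scoord x) <= eps.
Proof.
  intros Heps. destruct stable_eigenvalue as [Hmu [[Hmu0 Hmu1] Hmueig]].
  assert (KS0 : 0 <= KS) by (pose proof (Rabs_pos (IZR c)); pose proof (Rabs_pos (mu - IZR a)); lra).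
  assert (HKC : 0 <= KS * C).
  { apply Rmult_le_pos; auto. eapply Rle_trans. apply vnorm_ge0. apply (Hbd (0,0)). }
  assert (Hlam1 : lam > 1) by nra.
  assert (Hl1 : Rabs lam > 1) by (rewrite Rabs_right; lra).
  destruct (Pow_x_infinity lam Hl1 (KS * C / eps)) as [k Hk]. specialize (Hk k (le_n k)).
  assert (Hlk : 0 < lam ^ k) by (apply pow_lt; lra).
  rewrite Rabs_right in Hk by lra.
  assert (Hmk : mu ^ k * lam ^ k = 1) by (rewrite <- Rpow_mult_distr, Hmu; apply pow1).
  exists (n ^ k)%nat. split; [pose proof (Nat.pow_nonzero n k); lia|]. intros x.
  set (z := Nat.iter k (mact (Mat2 d (-b) (-c) a)) x).
  assert (Hz : Nat.iter k (mact A) z = x).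
  { unfold z. clear - Hdet. induction k as [|k IH]; [reflexivity|].
    rewrite Nat.iter_succ_r, Nat.iter_succ, mact_adj_r; auto. }
  rewrite <- Hz, iter_pow_conj, !eig_coord_iter_mact by auto.
  replace (mu ^ k * scoord (G z) - mu ^ k * scoord z) with (mu ^ k * (scoord (G z) - scoord z)) by ring.
  rewrite Rabs_mult, Rabs_right by (apply Rle_ge, pow_le; lra).
  apply Rle_trans with (mu ^ k * (KS * C)).
  { apply Rmult_le_compat_l; [apply pow_le; lra|].
    eapply Rle_trans; [apply eig_coord_lipschitz|]. apply Rmult_le_compat_l; auto. }
  apply Rmult_le_reg_r with (lam ^ k); auto.
  replace (mu ^ k * (KS * C) * lam ^ k) with (KS * C * (mu ^ k * lam ^ k)) by ring.
  rewrite Hmk, Rmult_1_r.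
  apply Rmult_le_reg_r with (/ eps); [apply Rinv_0_lt_compat; auto|].
  replace (eps * lam ^ k * / eps) with (lam ^ k) by (field; lra). unfold Rdiv in Hk. lra.
Qed.

(* On each unstable leaf, read in the stable coordinate, [G] induces a continuous injective
   map of the line with iterates arbitrarily close to the identity. *)
Lemma conj_relation_involution x0 : G (G x0) = x0.
Proof.
  destruct stable_eigenvalue as [Hmu [[Hmu0 Hmu1] _]].
  assert (Hc : IZR c <> 0) by (apply (hyperbolic_offdiag_nonzero a b c d); auto).
  assert (Hlm : lam <> mu) by nra.
  set (Y := eig_point (IZR a) (IZR c) lam mu (ucoord x0)).
  assert (UY : forall t, ucoord (Y t) = ucoord x0) by (intros; apply eig_coord_point_l; auto).
  assert (SY : forall t, scoord (Y t) = t) by (intros; apply eig_coord_point_r; auto).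
  assert (UGm : forall m y, ucoord (Nat.iter m G y) = ucoord y).
  { induction m; intros y; [reflexivity|]. rewrite Nat.iter_succ, ucoord_invariant. apply IHm. }
  set (psi := fun t => scoord (G (Y t))).
  assert (Piter : forall m t, Nat.iter m psi t = scoord (Nat.iter m G (Y t))).
  { induction m as [|m IH]; intros t; [symmetry; apply SY|].
    rewrite !Nat.iter_succ, IH. unfold psi. do 2 f_equal.
    apply (eig_coord_injective (IZR a) (IZR c) lam mu); auto.
    rewrite UY, UGm, UY. reflexivity. }
  assert (Pcont : continuity psi).
  { assert (EY : forall t, Y t = vadd (Y 0) (vscale t (eig_point (IZR a) (IZR c) lam mu 0 1)))
      by (intros; apply eig_point_line; auto).
    replace psi with (fun t => scoord (G (vadd (Y 0) (vscale t (eig_point (IZR a) (IZR c) lam mu 0 1)))))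
      by (apply functional_extensionality; intros t; unfold psi; rewrite <- EY; reflexivity).
    apply (rcontinuous_line G scoord KS); auto. apply eig_coord_lipschitz. }
  assert (Pinj : forall s t, psi s = psi t -> s = t).
  { intros s t E. rewrite <- (SY s), <- (SY t). f_equal. apply Hinj.
    apply (eig_coord_injective (IZR a) (IZR c) lam mu); auto.
    rewrite !ucoord_invariant, !UY. reflexivity. }
  assert (Psmall : forall eps, 0 < eps ->
            exists N, (1 <= N)%nat /\ forall t, Rabs (Nat.iter N psi t - t) <= eps).
  { intros eps Heps. destruct (scoord_near_identity eps Heps) as [N [HN1 HN]].
    exists N. split; auto. intros t. rewrite Piter. rewrite <- (SY t) at 2. apply HN. }
  pose proof (involution_of_near_identity_iterates psi Pcont Pinj Psmall (scoord x0)) as Hfix.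
  assert (HY0 : Y (scoord x0) = x0).
  { apply (eig_coord_injective (IZR a) (IZR c) lam mu); auto. }
  change (psi (psi (scoord x0))) with (Nat.iter 2 psi (scoord x0)) in Hfix.
  rewrite Piter, HY0 in Hfix.
  apply (eig_coord_injective (IZR a) (IZR c) lam mu); auto.
  rewrite !ucoord_invariant. reflexivity.
Qed.

End HyperbolicConjugacyInvolution.

(** * The element b has infinite order in BS(1,n) *)

Lemma eval_app {X} (h hi f fi : X -> X) u v x :
  eval_word h hi f fi (u ++ v) x = eval_word h hi f fi u (eval_word h hi f fi v x).
Proof. induction u as [|l u IH]; simpl; auto. rewrite IH. reflexivity. Qed.

Lemma eval_repeat_Lb {X} (h hi f fi : X -> X) k x :
  eval_word h hi f fi (repeat Lb k) x = Nat.iter k f x.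
Proof. induction k; simpl; auto. rewrite IHk. reflexivity. Qed.

Definition affine_eval (n : nat) : word -> R -> R :=
  eval_word (fun x => INR n * x) (fun x => x / INR n) (fun x => x + 1) (fun x => x - 1).

Lemma iter_plus1 k x : Nat.iter k (fun y => y + 1) x = x + INR k.
Proof. induction k; simpl Nat.iter. simpl; ring. rewrite IHk, S_INR. ring. Qed.

Lemma bs_eq_affine_eval n w1 w2 : (1 <= n)%nat -> bs_eq n w1 w2 -> forall x, affine_eval n w1 x = affine_eval n w2 x.
Proof.
  intros Hn H. assert (Hn0 : INR n <> 0) by (apply not_0_INR; lia).
  induction H; intros x.
  - unfold affine_eval. rewrite !eval_app. f_equal.
    destruct H as [[-> ->]|[[-> ->]|[[-> ->]|[[-> ->]|[-> ->]]]]]; simpl.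
    + field; auto.
    + field; auto.
    + ring.
    + ring.
    + rewrite eval_repeat_Lb, iter_plus1. field; auto.
  - reflexivity.
  - symmetry; auto.
  - rewrite IHbs_eq1; auto.
Qed.

Lemma bs_b_power_nontrivial n N : (1 <= n)%nat -> (1 <= N)%nat -> ~ bs_eq n (repeat Lb N) nil.
Proof.
  intros Hn HN Heq. pose proof (bs_eq_affine_eval n _ _ Hn Heq 0) as E.
  unfold affine_eval in E. rewrite eval_repeat_Lb, iter_plus1 in E. simpl in E.
  assert (0 < INR N) by (apply lt_0_INR; lia). lra.
Qed.

Section ToralConjugacy.

Variables (a b c d : Z) (n : nat).
Hypotheses (Hdet : (a * d - b * c = 1)%Z) (Htr : (Z.abs (a + d) > 2)%Z) (Hn : (2 <= n)%nat).

Local Notation A := (Mat2 a b c d).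
Local Notation Ai := (Mat2 d (- b) (- c) a).
Local Notation h := (toral_map a b c d).
Local Notation hi := (toral_map d (- b) (- c) a).

Lemma toral_map_adj_l p : hi (h p) = p.
Proof.
  rewrite <- (proj_rep p), <- (proj2 (lift_toral a b c d)), <- (proj2 (lift_toral d (-b) (-c) a)).
  f_equal. apply mact_adj_l; auto.
Qed.

Lemma toral_map_adj_r p : h (hi p) = p.
Proof.
  rewrite <- (proj_rep p), <- (proj2 (lift_toral d (-b) (-c) a)), <- (proj2 (lift_toral a b c d)).
  f_equal. apply mact_adj_r; auto.
Qed.

Lemma lift_conj_relation g G k : is_lift g G -> (forall p, h (g (hi p)) = Nat.iter k g p) ->
  exists v, is_int2 v /\ forall x, mact A (G (mact Ai x)) = vadd (Nat.iter k G x) v.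
Proof.
  intros LG Hrel.
  assert (LHS : is_lift (Nat.iter k g) (fun x => mact A (G (mact Ai x)))).
  { replace (Nat.iter k g) with (fun p => h (g (hi p))) by (apply functional_extensionality; auto).
    apply (lift_comp h (fun p => g (hi p)) (mact A)); [apply lift_toral|].
    apply lift_comp; auto. apply lift_toral. }
  exact (lift_unique _ _ _ LHS (lift_iter g G k LG)).
Qed.

Lemma conj_relation_linear_part g G B k : is_lift g G -> linear_part G B ->
  (forall p, h (g (hi p)) = Nat.iter k g p) -> mmul A B = mmul (mpow B k) A.
Proof.
  intros LG HB Hrel. destruct (lift_conj_relation g G k LG Hrel) as [v [_ Ev]].
  assert (LP1 : linear_part (fun x => vadd (Nat.iter k G x) v) (mmul A (mmul B Ai))).
  { replace (fun x => vadd (Nat.iter k G x) v) with (fun x => mact A (G (mact Ai x)))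
      by (apply functional_extensionality; auto).
    apply linear_part_comp. apply linear_part_mact. apply linear_part_comp; auto. apply linear_part_mact. }
  rewrite <- (linear_part_unique _ _ _ LP1 (linear_part_transl _ _ v (linear_part_iter G B k HB))).
  rewrite <- !mmul_assoc.
  replace (mmul Ai A) with mat_one by (unfold mmul, mat_one; cbn -[Z.mul Z.add]; f_equal; lia).
  rewrite mmul_id_r. reflexivity.
Qed.

Lemma commuting_lift_power f finv : is_homeo f finv ->
  (forall p, h (f (hi p)) = Nat.iter n f p) ->
  exists Q F1 C, (1 <= Q)%nat /\ is_lift (Nat.iter Q f) F1 /\ commutes_Z2 F1 /\
    forall x, vnorm (vsub (F1 x) x) <= C.
Proof.
  intros Hf Hrel. destruct (homeo_lift f finv Hf) as [F [B [LF [HB [HdetB [C0 HC0]]]]]].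
  pose proof (conj_relation_linear_part f F B n LF HB Hrel) as HAB.
  destruct (conj_power_finite_order a b c d B n Hdet ltac:(lia) Hn HdetB HAB) as [Q [HQ1 HQ]].
  destruct (displacement_iter F B C0 HC0 Q) as [C1 HC1]. rewrite HQ in HC1.
  exists Q, (Nat.iter Q F), C1. split; [|split; [|split]]; auto.
  - apply lift_iter; auto.
  - apply linear_part_one_commutes_Z2. rewrite <- HQ. apply linear_part_iter; auto.
  - intros x. rewrite <- (mact_id x) at 2. apply HC1.
Qed.

Variable lam : R.
Hypotheses (Heig : lam * lam - IZR (a + d) * lam + 1 = 0) (Hlam : lam > INR n).

Lemma commuting_lift_periodic g G C : is_lift g G -> commutes_Z2 G ->
  (forall p q, g p = g q -> p = q) -> (forall x, vnorm (vsub (G x) x) <= C) ->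
  (forall p, h (g (hi p)) = Nat.iter n g p) ->
  exists N, (1 <= N)%nat /\ forall p, Nat.iter N g p = p.
Proof.
  intros LG TG ginj HC Hrel.
  destruct (lift_conj_relation g G n LG Hrel) as [v [Hv Ev]].
  destruct (exact_conj_relation a b c d n G v Hdet Hn TG Hv Ev) as [q [w [Hq [Hw Hrelw]]]].
  set (G' := fun y => vadd (Nat.iter q G y) (vscale (-1) w)) in *.
  assert (Hmw : is_int2 (vscale (-1) w)) by (apply (is_int2_scale_Z (-1)); auto).
  assert (LG' : is_lift (Nat.iter q g) G') by (apply lift_transl; auto; apply lift_iter; auto).
  assert (TG' : commutes_Z2 G').
  { intros x m Hm. unfold G'. rewrite (commutes_Z2_iter G q TG) by auto. apply vec_eq; simpl; ring. }
  assert (Hinj : forall x y, G' x = G' y -> x = y).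
  { apply (lift_injective (Nat.iter q g)); auto. apply iter_injective; auto. }
  destruct (displacement_iter G mat_one C) with q as [C2 HC2].
  { intros x. rewrite mact_id. apply HC. }
  assert (HbdG : forall x, vnorm (vsub (G' x) x) <= C2 + vnorm (vscale (-1) w)).
  { intros x. pose proof (HC2 x) as H. rewrite mpow_one, mact_id in H.
    unfold G'. replace (vsub (vadd (Nat.iter q G x) (vscale (-1) w)) x) with
      (vadd (vsub (Nat.iter q G x) x) (vscale (-1) w)) by (apply vec_eq; simpl; ring).
    eapply Rle_trans. apply vnorm_triang. lra. }
  pose proof (conj_relation_involution a b c d lam n G' _ Hdet Htr Hn Heig Hlam
                (proj1 LG') Hinj HbdG Hrelw) as HGG.
  exists (2 * q)%nat. split; [lia|]. intros p.
  rewrite iter_mul. exact (lift_involutive _ _ LG' HGG p).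
Qed.

Lemma toral_conj_periodic f finv : is_homeo f finv ->
  (forall p, h (f (hi p)) = Nat.iter n f p) ->
  exists N, (1 <= N)%nat /\ forall p, Nat.iter N f p = p.
Proof.
  intros Hf Hrel.
  destruct (commuting_lift_power f finv Hf Hrel) as [Q [F1 [C [HQ [LF1 [TF1 HC]]]]]].
  assert (Hrel1 : forall p, h (Nat.iter Q f (hi p)) = Nat.iter n (Nat.iter Q f) p).
  { intros p. rewrite (iter_conj h hi f (Nat.iter n f) toral_map_adj_l toral_map_adj_r Hrel). apply iter_comm. }
  assert (finj : forall p q, Nat.iter Q f p = Nat.iter Q f q -> p = q).
  { apply iter_injective. intros x y E. destruct Hf as [Hl _]. rewrite <- (Hl x), <- (Hl y), E. reflexivity. }
  destruct (commuting_lift_periodic _ _ C LF1 TF1 finj HC Hrel1) as [N [HN HNper]].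
  exists (N * Q)%nat. split; [nia|]. intros p. rewrite iter_mul. apply HNper.
Qed.

End ToralConjugacy.

Theorem mainTheorem15 (n : nat) (a b c d : Z) (lam : R) :
  (2 <= n)%nat ->
  in_SL2Z a b c d ->
  hyperbolic a b c d ->
  is_eigenvalue a b c d lam ->
  lam > INR n ->
  ~ exists f finv : T2 -> T2,
      is_homeo f finv /\
      (forall p, toral_map a b c d (f (toral_map d (- b) (- c) a p))
                 = Nat.iter n f p) /\
      (forall w1 w2 : word,
          (forall p, eval_word (toral_map a b c d) (toral_map d (- b) (- c) a)
                               f finv w1 p
                   = eval_word (toral_map a b c d) (toral_map d (- b) (- c) a)
                               f finv w2 p) ->
          bs_eq n w1 w2).
Proof.
  intros Hn Hdet Htr Heig Hlam [f [finv [Hf [Hrel Hfaith]]]].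
  destruct (toral_conj_periodic a b c d n Hdet Htr Hn lam
              (eigenvalue_char_poly a b c d lam Hdet Heig) Hlam f finv Hf Hrel) as [N [HN Hper]].
  apply (bs_b_power_nontrivial n N); [lia | exact HN |].
  apply Hfaith. intros p. rewrite eval_repeat_Lb. exact (Hper p).
Qed.
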